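(* Let $f$ be such that $f(t)\to0$ as $t\to\infty$ and $f$ is eventually decreasing, and $f\in C^2(0,\infty)$ is convex on $(0,\infty)$ with $f''$ monotone on some interval $(0,\epsilon)$. (a) If moreover $f(0)$ is finite and there exists $\sigma_1\in(0,1)$ with $\lim_{t\to0}t^{\sigma_1}f'(t)=0$, then $\lim_{\omega\to\infty}\omega^{2-\sigma_1}\mathcal F_{\cos}(\omega)=0$ and $\lim_{\omega\to\infty}\omega\mathcal F_{\sin}(\omega)=f(0)$. (b) If moreover $f(0)$ is infinite and there exists $\sigma_2\in(0,1)$ with $\lim_{t\to0}t^{\sigma_2}f(t)\in(0,\infty)$, then $\lim_{\omega\to\infty}\omega^{1-\sigma_2}\mathcal F_{\cos}(\omega)\in(0,\infty)$ and $\lim_{\omega\to\infty}\omega^{1-\sigma_2}\mathcal F_{\sin}(\omega)\in(0,\infty)$.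
   Context: For $\omega\ne0$, $\mathcal F_{\cos}(\omega)=\int_0^\infty f(t)\cos(t\omega)dt$ and $\mathcal F_{\sin}(\omega)=\int_0^\infty f(t)\sin(t\omega)dt$ (improper integrals). Here $f$ is defined on $[0,\infty)$ (extended evenly to $\mathbb{R}$), real-valued on $(0,\infty)$, with $f(0)$ possibly $+\infty$. *)

From Stdlib Require Import Reals.
From Coquelicot Require Import Coquelicot.
Open Scope R_scope.

Definition is_Fcos (f : R -> R) (w l : R) : Prop :=
  is_RInt_gen (fun t => f t * cos (t * w)) (at_right 0) (Rbar_locally p_infty) l.

Definition is_Fsin (f : R -> R) (w l : R) : Prop :=
  is_RInt_gen (fun t => f t * sin (t * w)) (at_right 0) (Rbar_locally p_infty) l.

Definition C2_pos (f : R -> R) : Prop :=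
  forall t, 0 < t ->
    ex_derive f t /\ ex_derive (Derive f) t /\ continuous (Derive (Derive f)) t.

Definition convex_pos (f : R -> R) : Prop :=
  forall x y th, 0 < x -> 0 < y -> 0 <= th <= 1 ->
    f (th * x + (1 - th) * y) <= th * f x + (1 - th) * f y.

Definition eventually_decreasing (f : R -> R) : Prop :=
  exists M, forall s t, M <= s -> s <= t -> f t <= f s.

Definition monotone_on_0 (g : R -> R) (eps : R) : Prop :=
  (forall s t, 0 < s -> s <= t -> t < eps -> g s <= g t) \/
  (forall s t, 0 < s -> s <= t -> t < eps -> g t <= g s).

From Stdlib Require Import Reals Lra.
From Coquelicot Require Import Coquelicot.
Open Scope R_scope.

(* Convexity and f -> 0 at infinity force f >= 0 and f' <= 0 with f' increasing to 0, so
   that f and -f' both decrease to 0 on (0, oo); nothing else is needed from the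
   hypotheses (eventual monotonicity, monotonicity of f'' near 0 and f(0) = oo in (b)
   follow or are unused).  For such a decreasing g and a kernel s = cos or sin with
   bounded primitive S, Abel's bound |int_T^b g(t) s(tw) dt| <= 2 g(T) / w, together with
   g = O(t^(-sg)) near 0, makes the transforms converge.

   (a) Integrating by parts, w F(w) = - f(0) S(0) + int_0^oo (- f'(t)) S(tw) dt.  Split at
   T = 1/w: on (0, T) the integral is at most f(0) - f(T) since |S| <= 1, on (T, oo) it is
   at most 2 |f'(T)| / w by Abel's bound for -f'; both are o(w^(sg - 1)) because
   t^sg f'(t) -> 0.  For the cosine S = sin and S(0) = 0, for the sine S = -cos.

   (b) Substituting u = tw, w^(1-sg) F(w) = int_0^oo w^(-sg) f(u/w) s(u) du.  On (0, A] the
   weight w^(-sg) f(u/w) is uniformly close to C u^(-sg) relative to u^(-sg) once w is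
   large, and both tails beyond A are O(A^(-sg)) by Abel's bound, so the limit is
   C int_0^oo u^(-sg) s(u) du.  For the sine this is positive since the decreasing weight
   favours the first positive half-wave, and the cosine integral reduces to it by parts. *)

Local Notation is_RInt_0_oo h l := (is_RInt_gen h (at_right 0) (Rbar_locally p_infty) l).

(* Coquelicot's generic lemmas at [R -> R], where unification cannot infer the
   normed-module structure on its own. *)
Lemma continuous_of_is_derive (h : R -> R) x l : is_derive h x l -> continuous h x.
Proof. intro H. apply (ex_derive_continuous (K := R_AbsRing) (V := R_NormedModule)). now exists l. Qed.

Lemma continuous_mult_R (g h : R -> R) x :
  continuous g x -> continuous h x -> continuous (fun y => g y * h y) x.
Proof. apply (continuous_mult g h). Qed.

Lemma continuous_plus_R (g h : R -> R) x :
  continuous g x -> continuous h x -> continuous (fun y => g y + h y) x.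
Proof. apply (continuous_plus (V := R_NormedModule) g h). Qed.

Lemma ex_RInt_continuous_R (h : R -> R) a b :
  (forall z, Rmin a b <= z <= Rmax a b -> continuous h z) -> ex_RInt h a b.
Proof. apply (ex_RInt_continuous (V := R_CompleteNormedModule)). Qed.

Lemma ex_RInt_scal_R (h : R -> R) a b c : ex_RInt h a b -> ex_RInt (fun x => c * h x) a b.
Proof. apply (ex_RInt_scal (V := R_NormedModule)). Qed.

Lemma is_RInt_unique_R (h : R -> R) a b l : is_RInt h a b l -> RInt h a b = l.
Proof. apply (is_RInt_unique (V := R_CompleteNormedModule)). Qed.

Lemma is_RInt_derive_R (g dg : R -> R) a b :
  (forall x, Rmin a b <= x <= Rmax a b -> is_derive g x (dg x)) ->
  (forall x, Rmin a b <= x <= Rmax a b -> continuous dg x) -> is_RInt dg a b (g b - g a).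
Proof. apply (is_RInt_derive (V := R_CompleteNormedModule)). Qed.

Lemma RInt_plus_R (g h : R -> R) a b : ex_RInt g a b -> ex_RInt h a b ->
  RInt (fun x => g x + h x) a b = RInt g a b + RInt h a b.
Proof. apply (RInt_plus (V := R_CompleteNormedModule)). Qed.

Lemma RInt_minus_R (g h : R -> R) a b : ex_RInt g a b -> ex_RInt h a b ->
  RInt (fun x => g x - h x) a b = RInt g a b - RInt h a b.
Proof. apply (RInt_minus (V := R_CompleteNormedModule)). Qed.

Lemma RInt_scal_R (h : R -> R) a b c : ex_RInt h a b -> RInt (fun x => c * h x) a b = c * RInt h a b.
Proof. apply (RInt_scal (V := R_CompleteNormedModule)). Qed.

Lemma RInt_Chasles_R (h : R -> R) a b c : ex_RInt h a b -> ex_RInt h b c ->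
  RInt h a b + RInt h b c = RInt h a c.
Proof. apply (RInt_Chasles (V := R_CompleteNormedModule)). Qed.

Lemma ex_RInt_pos (h : R -> R) a b :
  (forall t, 0 < t -> continuous h t) -> 0 < a -> 0 < b -> ex_RInt h a b.
Proof.
  intros Hh Ha Hb. apply ex_RInt_continuous_R. intros z Hz. apply Hh.
  pose proof (Rmin_glb_lt a b 0 Ha Hb). lra.
Qed.

Lemma RInt_abs_le (h k : R -> R) a b : a <= b -> ex_RInt h a b -> ex_RInt k a b ->
  (forall t, a <= t <= b -> Rabs (h t) <= k t) -> Rabs (RInt h a b) <= RInt k a b.
Proof.
  intros Hab [lh Ih] [lk Ik] H.
  rewrite (is_RInt_unique_R h a b lh Ih), (is_RInt_unique_R k a b lk Ik).
  exact (norm_RInt_le h k a b lh lk Hab H Ih Ik).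
Qed.

Lemma RInt_abs_swap (h : R -> R) a b : ex_RInt h a b -> Rabs (RInt h b a) = Rabs (RInt h a b).
Proof.
  intro E. rewrite <- (opp_RInt_swap (V := R_CompleteNormedModule) h a b E).
  apply Rabs_Ropp.
Qed.

Lemma nondecreasing_of_derive_nonneg (g dg : R -> R) (lo hi : R) :
  (forall t, lo < t < hi -> is_derive g t (dg t)) ->
  (forall t, lo < t < hi -> 0 <= dg t) ->
  forall x y, lo < x -> x <= y -> y < hi -> g x <= g y.
Proof.
  intros Hd Hp x y Hx [Hxy | ->] Hy; [|lra].
  destruct (MVT_cor2 g dg x y Hxy) as [c [Hc1 Hc2]].
  - intros c Hc. apply is_derive_Reals, Hd. lra.
  - assert (0 <= dg c * (y - x)) by (apply Rmult_le_pos; [apply Hp|]; lra). lra.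
Qed.

Lemma is_derive_scale_arg (S s : R -> R) (w : R) : (forall x, is_derive S x (s x)) ->
  forall t, is_derive (fun t => S (t * w)) t (w * s (t * w)).
Proof.
  intros HS t.
  assert (H1 : is_derive (fun t => t * w) t w) by (auto_derive; auto; ring).
  exact (is_derive_comp S (fun t => t * w) t (s (t * w)) w (HS (t * w)) H1).
Qed.

Lemma continuous_scale_arg (s : R -> R) (w : R) :
  (forall x, continuous s x) -> forall t, continuous (fun t => s (t * w)) t.
Proof.
  intros Hs t. apply (continuous_comp (fun t => t * w) s); [|apply Hs].
  apply (continuous_of_is_derive _ t w). auto_derive; auto; ring.
Qed.

Lemma ball_0_pos_iff (d y : R) : 0 < y -> (ball 0 d y <-> y < d).
Proof.
  intro Hy. change (ball 0 d y) with (Rabs (y - 0) < d).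
  rewrite Rminus_0_r, Rabs_pos_eq by lra. tauto.
Qed.

Lemma locally_abs_lt (L e : R) : 0 < e -> locally L (fun y => Rabs (y - L) < e).
Proof. intro He. now exists (mkposreal e He). Qed.

Lemma filterlim_pinfty_eps_iff (g : R -> R) (L : R) :
  filterlim g (Rbar_locally p_infty) (locally L) <->
  forall e, 0 < e -> exists M, forall t, M < t -> Rabs (g t - L) < e.
Proof.
  split.
  - intros H e He. exact (H _ (locally_abs_lt L e He)).
  - intros H P [e He]. destruct (H e (cond_pos e)) as [M HM].
    exists M. intros t Ht. apply He, HM, Ht.
Qed.

Lemma filterlim_at_right_0_eps (g : R -> R) (L : R) :
  filterlim g (at_right 0) (locally L) ->
  forall e, 0 < e -> exists d, 0 < d /\ forall t, 0 < t < d -> Rabs (g t - L) < e.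
Proof.
  intros H e He. destruct (H _ (locally_abs_lt L e He)) as [d Hd].
  exists d. split; [apply cond_pos|]. intros t Ht. apply Hd; [apply ball_0_pos_iff|]; lra.
Qed.

Lemma continuous_eps (g : R -> R) (x : R) : continuous g x ->
  forall e, 0 < e -> exists r, 0 < r /\ forall t, Rabs (t - x) < r -> Rabs (g t - g x) < e.
Proof.
  intros H e He. destruct (H _ (locally_abs_lt (g x) e He)) as [r Hr].
  exists r. split; [apply cond_pos | exact Hr].
Qed.

Lemma is_RInt_0_oo_eps_iff (h : R -> R) (l : R) :
  is_RInt_0_oo h l <->
  forall e, 0 < e -> exists d, 0 < d /\ exists M, forall a b, 0 < a < d -> M < b ->
    exists y, is_RInt h a b y /\ Rabs (y - l) < e.
Proof.
  split.
  - intros H e He. destruct (H _ (locally_abs_lt l e He)) as [Q P [d Hd] [M HM] HQP].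
    exists d. split; [apply cond_pos|]. exists M. intros a b Ha Hb.
    apply HQP; [apply Hd; [apply ball_0_pos_iff|]; lra | apply HM, Hb].
  - intros H P [e He]. destruct (H e (cond_pos e)) as [d [Hd [M HM]]].
    apply (Filter_prod _ _ _ (fun a => 0 < a < d) (fun b => M < b)).
    + exists (mkposreal d Hd). intros y Hy Hy0. apply (ball_0_pos_iff _ _ Hy0) in Hy; simpl in *; lra.
    + now exists M.
    + intros a b Ha Hb. destruct (HM a b Ha Hb) as [y [Hy1 Hy2]].
      exists y. split; [exact Hy1 | apply He, Hy2].
Qed.

Lemma is_RInt_0_oo_approx (h : R -> R) (l d M e : R) : is_RInt_0_oo h l -> 0 < d -> 0 < e ->
  exists a b, 0 < a < d /\ M < b /\ Rabs (RInt h a b - l) < e.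
Proof.
  intros Hl Hd He. destruct (proj1 (is_RInt_0_oo_eps_iff h l) Hl e He) as [d1 [Hd1 [M1 HM1]]].
  set (a := Rmin d d1 / 2). set (b := Rmax M M1 + 1).
  pose proof (Rmin_l d d1). pose proof (Rmin_r d d1). pose proof (Rmin_pos d d1 Hd Hd1).
  pose proof (Rmax_l M M1). pose proof (Rmax_r M M1).
  destruct (HM1 a b) as [y [Iy Hy]]; [unfold a; lra | unfold b; lra |].
  exists a, b. split; [unfold a; lra|]. split; [unfold b; lra|].
  now rewrite (is_RInt_unique_R h a b y Iy).
Qed.

Lemma is_RInt_0_oo_abs_sub_le (h : R -> R) (l X B : R) : is_RInt_0_oo h l ->
  (forall e, 0 < e -> exists d, 0 < d /\ exists M, forall a b, 0 < a < d -> M < b ->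
      Rabs (RInt h a b - X) <= B + e) ->
  Rabs (l - X) <= B.
Proof.
  intros Hl H. apply Rle_plus_epsilon. intros e He.
  destruct (H (e / 2)) as [d [Hd [M HM]]]; [lra|].
  destruct (is_RInt_0_oo_approx h l d M (e / 2) Hl Hd) as [a [b [Ha [Hb Hab]]]]; [lra|].
  specialize (HM a b Ha Hb).
  replace (l - X) with ((RInt h a b - X) - (RInt h a b - l)) by ring.
  pose proof (Rabs_triang (RInt h a b - X) (- (RInt h a b - l))).
  rewrite Rabs_Ropp in H0. unfold Rminus at 1. lra.
Qed.

Lemma is_RInt_0_oo_ge (h : R -> R) (l B : R) : is_RInt_0_oo h l ->
  (exists d, 0 < d /\ exists M, forall a b, 0 < a < d -> M < b -> B <= RInt h a b) ->
  B <= l.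
Proof.
  intros Hl [d [Hd [M HM]]]. apply Rnot_lt_le. intro Hlt.
  destruct (is_RInt_0_oo_approx h l d M (B - l) Hl Hd) as [a [b [Ha [Hb Hab]]]]; [lra|].
  specialize (HM a b Ha Hb). pose proof (Rle_abs (RInt h a b - l)). lra.
Qed.

Lemma is_RInt_0_oo_cauchy (h : R -> R) :
  (forall t, 0 < t -> continuous h t) ->
  (forall e, 0 < e -> exists d, 0 < d /\ forall a b, 0 < a < d -> 0 < b < d -> Rabs (RInt h a b) < e) ->
  (forall e, 0 < e -> exists M, forall a b, M < a -> M < b -> Rabs (RInt h a b) < e) ->
  exists l, is_RInt_0_oo h l.
Proof.
  intros Hc H0 Hoo.
  assert (FF : ProperFilter (filter_prod (at_right 0) (Rbar_locally p_infty)))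
    by apply filter_prod_proper.
  set (near := fun ab : R * R => 0 < fst ab < 1 /\ 1 < snd ab).
  assert (Hnear : filter_prod (at_right 0) (Rbar_locally p_infty) near).
  { apply (Filter_prod _ _ _ (fun a => 0 < a < 1) (fun b => 1 < b)); [| now exists 1 | easy].
    exists (mkposreal 1 Rlt_0_1). intros y Hy Hy0.
    apply (ball_0_pos_iff _ _ Hy0) in Hy; simpl in *; lra. }
  destruct (proj1 (filterlim_locally_cauchy (F := filter_prod (at_right 0) (Rbar_locally p_infty))
      (fun ab : R * R => RInt h (fst ab) (snd ab)))) as [l Hl].
  - intros eps.
    destruct (H0 (eps / 2)) as [d [Hd Hd']]; [destruct eps; simpl; lra|].
    destruct (Hoo (eps / 2)) as [M HM]; [destruct eps; simpl; lra|].
    exists (fun ab : R * R => near ab /\ fst ab < d /\ M < snd ab). split.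
    + apply filter_and; [exact Hnear|].
      apply (Filter_prod _ _ _ (fun a => a < d) (fun b => M < b)); [| now exists M | easy].
      exists (mkposreal d Hd). intros y Hy Hy0. apply (ball_0_pos_iff _ _ Hy0) in Hy; simpl in *; lra.
    + intros [a b] [a' b'] [[Ha Hb] [Had HbM]] [[Ha' Hb'] [Had' HbM']]; simpl in *.
      change (Rabs (RInt h a' b' - RInt h a b) < eps).
      assert (E : RInt h a' b' - RInt h a b = RInt h a' a + RInt h b b').
      { rewrite <- (RInt_Chasles_R h a' a b'), <- (RInt_Chasles_R h a b b');
          try (apply ex_RInt_pos; auto; lra). ring. }
      rewrite E.
      assert (Rabs (RInt h a' a) < eps / 2) by (apply Hd'; lra).
      assert (Rabs (RInt h b b') < eps / 2) by (apply HM; lra).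
      pose proof (Rabs_triang (RInt h a' a) (RInt h b b')). lra.
  - exists l. intros P HP. unfold filtermapi.
    apply (filter_imp (fun ab => near ab /\ P (RInt h (fst ab) (snd ab)))).
    + intros [a b] [[Ha Hb] HPab]. exists (RInt h a b). split; [|exact HPab].
      apply (RInt_correct (V := R_CompleteNormedModule)), ex_RInt_pos; simpl in *; auto; lra.
    + apply filter_and; [exact Hnear | apply Hl, HP].
Qed.

Lemma is_RInt_0_oo_RInt_gen (h : R -> R) :
  (exists l, is_RInt_0_oo h l) ->
  is_RInt_0_oo h (RInt_gen h (at_right 0) (Rbar_locally p_infty)).
Proof.
  apply (RInt_gen_correct (V := R_CompleteNormedModule)
    (FFa := Proper_StrongProper _ (at_right_proper_filter 0))
    (FFb := Proper_StrongProper _ (Rbar_locally_filter p_infty))).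
Qed.

Lemma is_RInt_0_oo_ext (g h : R -> R) l :
  (forall t, 0 < t -> g t = h t) -> is_RInt_0_oo g l -> is_RInt_0_oo h l.
Proof.
  intros Hgh. apply (is_RInt_gen_ext (V := R_NormedModule)).
  apply (Filter_prod _ _ _ (fun a => 0 < a) (fun b => 0 < b)).
  - exists (mkposreal 1 Rlt_0_1). intros y _ Hy. exact Hy.
  - now exists 0.
  - intros a b Ha Hb x Hx. apply Hgh. pose proof (Rmin_glb_lt a b 0 Ha Hb). simpl in *. lra.
Qed.

Lemma is_RInt_0_oo_scale (h : R -> R) w l : 0 < w -> (forall u, 0 < u -> continuous h u) ->
  is_RInt_0_oo (fun t => h (t * w)) l -> is_RInt_0_oo h (w * l).
Proof.
  intros Hw Hh Hl. apply is_RInt_0_oo_eps_iff. intros e He.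
  destruct (proj1 (is_RInt_0_oo_eps_iff _ l) Hl (e / w)) as [d [Hd [M HM]]];
    [apply Rdiv_lt_0_compat; lra|].
  exists (d * w). split; [nra|]. exists (Rmax M 0 * w). intros a b Ha Hb.
  pose proof (Rmax_l M 0). pose proof (Rmax_r M 0).
  assert (Haw : 0 < a / w < d).
  { split; [apply Rdiv_lt_0_compat; lra|]. apply (Rmult_lt_reg_r w); [lra|].
    replace (a / w * w) with a by (field; lra). lra. }
  assert (Hbw : M < b / w /\ 0 < b).
  { split; [|nra]. apply (Rmult_lt_reg_r w); [lra|]. replace (b / w * w) with b by (field; lra). nra. }
  destruct (HM (a / w) (b / w) Haw (proj1 Hbw)) as [y [Iy Hy]].
  exists (RInt h a b). split.
  - apply (RInt_correct (V := R_CompleteNormedModule)), ex_RInt_pos; auto; lra.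
  - assert (E : RInt h a b = w * y).
    { rewrite <- (is_RInt_unique_R _ _ _ _ Iy), <- RInt_scal_R by (eexists; exact Iy).
      symmetry. apply is_RInt_unique_R.
      apply (is_RInt_ext (fun t => scal w (h (w * t + 0)))).
      - intros t _. change (w * h (w * t + 0) = w * h (t * w)). f_equal. f_equal. ring.
      - apply (is_RInt_comp_lin (V := R_NormedModule)).
        replace (w * (a / w) + 0) with a by (field; lra).
        replace (w * (b / w) + 0) with b by (field; lra).
        apply (RInt_correct (V := R_CompleteNormedModule)), ex_RInt_pos; auto; lra. }
    rewrite E. replace (w * y - w * l) with (w * (y - l)) by ring.
    rewrite Rabs_mult, Rabs_pos_eq by lra. apply (Rmult_lt_reg_r (/ w)); [apply Rinv_0_lt_compat; lra|].
    replace (w * Rabs (y - l) * / w) with (Rabs (y - l)) by (field; lra). exact Hy.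
Qed.

Lemma RInt_by_parts (g dg S s : R -> R) (x y : R) : x <= y ->
  (forall t, x <= t <= y -> is_derive g t (dg t) /\ continuous dg t) ->
  (forall t, x <= t <= y -> is_derive S t (s t) /\ continuous s t) ->
  RInt (fun t => g t * s t) x y = g y * S y - g x * S x - RInt (fun t => dg t * S t) x y.
Proof.
  intros Hxy Hg HS.
  assert (Hin : forall t, Rmin x y <= t <= Rmax x y -> x <= t <= y)
    by (intro t; rewrite Rmin_left, Rmax_right; auto).
  assert (Hcg : forall t, x <= t <= y -> continuous g t)
    by (intros t Ht; apply (continuous_of_is_derive g t (dg t)), Hg, Ht).
  assert (HcS : forall t, x <= t <= y -> continuous S t)
    by (intros t Ht; apply (continuous_of_is_derive S t (s t)), HS, Ht).
  assert (I : is_RInt (fun t => dg t * S t + g t * s t) x y (g y * S y - g x * S x)).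
  { apply (is_RInt_derive_R (fun t => g t * S t)); intros t Ht; apply Hin in Ht.
    - apply (is_derive_mult g S); [exact (proj1 (Hg t Ht)) | exact (proj1 (HS t Ht)) |].
      intros; apply Rmult_comm.
    - apply continuous_plus_R; apply continuous_mult_R.
      + exact (proj2 (Hg t Ht)).
      + exact (HcS t Ht).
      + exact (Hcg t Ht).
      + exact (proj2 (HS t Ht)). }
  apply is_RInt_unique_R in I. rewrite RInt_plus_R in I; [lra|..];
    apply ex_RInt_continuous_R; intros t Ht; apply Hin in Ht; apply continuous_mult_R.
  - exact (proj2 (Hg t Ht)).
  - exact (HcS t Ht).
  - exact (Hcg t Ht).
  - exact (proj2 (HS t Ht)).
Qed.

Lemma Rpower_pos x y : 0 < Rpower x y.
Proof. apply exp_pos. Qed.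

Lemma is_derive_Rpower x y : 0 < x -> is_derive (fun t => Rpower t y) x (y * Rpower x (y - 1)).
Proof. intro H. apply is_derive_Reals, derivable_pt_lim_power, H. Qed.

Lemma continuous_Rpower x y : 0 < x -> continuous (fun t => Rpower t y) x.
Proof. intro H. exact (continuous_of_is_derive _ _ _ (is_derive_Rpower x y H)). Qed.

Lemma Rpower_Ropp_le_contravar c a b : 0 <= c -> 0 < a <= b -> Rpower b (- c) <= Rpower a (- c).
Proof.
  intros Hc Hab. rewrite !Rpower_Ropp.
  apply Rinv_le_contravar; [apply Rpower_pos | apply Rle_Rpower_l; auto].
Qed.

Lemma Rpower_Ropp_lt_contravar c a b : 0 < c -> 0 < a < b -> Rpower b (- c) < Rpower a (- c).
Proof.
  intros Hc Hab. rewrite !Rpower_Ropp. apply Rinv_lt_contravar.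
  - apply Rmult_lt_0_compat; apply Rpower_pos.
  - apply Rlt_Rpower_l; auto.
Qed.

Lemma Rpower_Rinv_l x c : 0 < x -> Rpower (/ x) c = / Rpower x c.
Proof. intro Hx. unfold Rpower. rewrite ln_Rinv, <- exp_Ropp by exact Hx. f_equal. ring. Qed.

Lemma Rpower_small_near_0 c eta : 0 < c -> 0 < eta ->
  exists d, 0 < d /\ forall t, 0 < t < d -> Rpower t c < eta.
Proof.
  intros Hc He. exists (Rpower eta (/ c)). split; [apply Rpower_pos|].
  intros t Ht. replace eta with (Rpower (Rpower eta (/ c)) c).
  - apply Rlt_Rpower_l; auto.
  - rewrite Rpower_mult. replace (/ c * c) with 1 by (field; lra). apply Rpower_1, He.
Qed.

Lemma Rpower_Ropp_small_near_oo c eta : 0 < c -> 0 < eta ->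
  exists M, forall t, M < t -> Rpower t (- c) < eta.
Proof.
  intros Hc He. destruct (Rpower_small_near_0 c eta Hc He) as [d [Hd Hd']].
  exists (/ d). intros t Ht.
  assert (Ht0 : 0 < t) by (pose proof (Rinv_0_lt_compat d Hd); lra).
  assert (Hd_t : 0 < / t < d).
  { split; [apply Rinv_0_lt_compat; lra|].
    rewrite <- (Rinv_inv d). apply Rinv_lt_contravar; [|exact Ht].
    apply Rmult_lt_0_compat; [apply Rinv_0_lt_compat|]; lra. }
  specialize (Hd' (/ t) Hd_t). now rewrite Rpower_Rinv_l, <- Rpower_Ropp in Hd'.
Qed.

Lemma Rpower_mult_Ropp x c : 0 < x -> Rpower x c * Rpower x (- c) = 1.
Proof. intro Hx. rewrite <- Rpower_plus, Rplus_opp_r. apply Rpower_O, Hx. Qed.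

Lemma Rpower_1_minus x c : 0 < x -> Rpower x (1 - c) = x * Rpower x (- c).
Proof. intro Hx. unfold Rminus. rewrite Rpower_plus, Rpower_1 by exact Hx. reflexivity. Qed.

Lemma is_derive_Rpower_primitive sg t : sg <> 1 -> 0 < t ->
  is_derive (fun t => Rpower t (1 - sg) / (1 - sg)) t (Rpower t (- sg)).
Proof.
  intros Hsg Ht.
  apply (is_derive_ext (fun t => / (1 - sg) * Rpower t (1 - sg))); [intros; apply Rmult_comm|].
  replace (Rpower t (- sg)) with (/ (1 - sg) * ((1 - sg) * Rpower t ((1 - sg) - 1)))
    by (replace ((1 - sg) - 1) with (- sg) by ring; field; lra).
  apply (is_derive_scal (fun t => Rpower t (1 - sg))), is_derive_Rpower, Ht.
Qed.

Lemma is_RInt_Rpower_Ropp sg a b : sg <> 1 -> 0 < a -> 0 < b ->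
  is_RInt (fun t => Rpower t (- sg)) a b
    (Rpower b (1 - sg) / (1 - sg) - Rpower a (1 - sg) / (1 - sg)).
Proof.
  intros Hsg Ha Hb.
  apply (is_RInt_derive_R (fun t => Rpower t (1 - sg) / (1 - sg))); intros x Hx;
    assert (0 < x) by (pose proof (Rmin_glb_lt a b 0 Ha Hb); lra).
  - apply is_derive_Rpower_primitive; assumption.
  - apply continuous_Rpower; assumption.
Qed.

Lemma RInt_abs_le_power (h : R -> R) (sg K a b : R) : 0 < sg < 1 -> 0 < a <= b ->
  (forall t, 0 < t -> continuous h t) ->
  (forall t, a <= t <= b -> Rabs (h t) <= K * Rpower t (- sg)) ->
  Rabs (RInt h a b) <= K * (Rpower b (1 - sg) / (1 - sg)).
Proof.
  intros Hs Hab Hc Hb.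
  assert (I : is_RInt (fun t => K * Rpower t (- sg)) a b
                (K * (Rpower b (1 - sg) / (1 - sg) - Rpower a (1 - sg) / (1 - sg)))).
  { apply (is_RInt_scal (V := R_NormedModule)), is_RInt_Rpower_Ropp; lra. }
  assert (HK : 0 <= K).
  { specialize (Hb a ltac:(lra)). pose proof (Rabs_pos (h a)). pose proof (Rpower_pos a (- sg)). nra. }
  assert (0 <= K * (Rpower a (1 - sg) / (1 - sg))).
  { apply Rmult_le_pos; [exact HK|]. apply Rlt_le, Rdiv_lt_0_compat; [apply Rpower_pos | lra]. }
  eapply Rle_trans.
  - apply RInt_abs_le; [lra | apply ex_RInt_pos; auto; lra | eexists; exact I | exact Hb].
  - rewrite (is_RInt_unique_R _ _ _ _ I). lra.
Qed.

Lemma RInt_abs_lt_wlog (h : R -> R) (P : R -> Prop) (e : R) :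
  (forall a b, P a -> P b -> ex_RInt h a b) ->
  (forall a b, P a -> P b -> a <= b -> Rabs (RInt h a b) < e) ->
  forall a b, P a -> P b -> Rabs (RInt h a b) < e.
Proof.
  intros E H a b Ha Hb. destruct (Rle_or_lt a b).
  - apply H; auto.
  - rewrite <- RInt_abs_swap by (apply E; auto). apply H; auto; lra.
Qed.

Record bounded_wave (s S : R -> R) : Prop := {
  wave_derive : forall x, is_derive S x (s x);
  wave_continuous : forall x, continuous s x;
  wave_bound : forall x, Rabs (s x) <= 1;
  wave_primitive_bound : forall x, Rabs (S x) <= 1 }.

Lemma bounded_wave_cos : bounded_wave cos sin.
Proof.
  split; intro x.
  - apply is_derive_Reals, derivable_pt_lim_sin.
  - apply (continuous_of_is_derive cos x (- sin x)), is_derive_Reals, derivable_pt_lim_cos.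
  - apply Rabs_le, COS_bound.
  - apply Rabs_le, SIN_bound.
Qed.

Lemma bounded_wave_sin : bounded_wave sin (fun x => - cos x).
Proof.
  split; intro x.
  - apply is_derive_Reals. replace (sin x) with (- - sin x) by ring.
    apply derivable_pt_lim_opp, derivable_pt_lim_cos.
  - apply (continuous_of_is_derive sin x (cos x)), is_derive_Reals, derivable_pt_lim_sin.
  - apply Rabs_le, SIN_bound.
  - rewrite Rabs_Ropp. apply Rabs_le, COS_bound.
Qed.

Lemma bounded_wave_opp_cos : bounded_wave (fun x => - cos x) (fun x => - sin x).
Proof.
  split; intro x.
  - apply is_derive_Reals, derivable_pt_lim_opp, derivable_pt_lim_sin.
  - apply (continuous_of_is_derive _ x (sin x)), is_derive_Reals.
    replace (sin x) with (- - sin x) by ring. apply derivable_pt_lim_opp, derivable_pt_lim_cos.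
  - rewrite Rabs_Ropp. apply Rabs_le, COS_bound.
  - rewrite Rabs_Ropp. apply Rabs_le, SIN_bound.
Qed.

Lemma bounded_wave_primitive_continuous s S : bounded_wave s S -> forall x, continuous S x.
Proof. intros Hw x. exact (continuous_of_is_derive _ _ _ (wave_derive _ _ Hw x)). Qed.

Record decreasing_to_0 (g dg : R -> R) : Prop := {
  decr_derive : forall t, 0 < t -> is_derive g t (dg t);
  decr_derive_continuous : forall t, 0 < t -> continuous dg t;
  decr_derive_nonpos : forall t, 0 < t -> dg t <= 0;
  decr_nonneg : forall t, 0 < t -> 0 <= g t;
  decr_lim : forall e, 0 < e -> exists M, forall t, M < t -> g t < e }.

Lemma decreasing_to_0_nonincreasing g dg : decreasing_to_0 g dg ->
  forall x y, 0 < x -> x <= y -> g y <= g x.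
Proof.
  intros Hg x y Hx Hxy. cut (- g x <= - g y); [lra|].
  apply (nondecreasing_of_derive_nonneg (fun t => - g t) (fun t => - dg t) 0 (y + 1));
    try lra; intros t Ht.
  - apply (is_derive_opp g), (decr_derive _ _ Hg). lra.
  - pose proof (decr_derive_nonpos _ _ Hg t ltac:(lra)). lra.
Qed.

Lemma decreasing_to_0_continuous g dg : decreasing_to_0 g dg -> forall t, 0 < t -> continuous g t.
Proof. intros Hg t Ht. exact (continuous_of_is_derive _ _ _ (decr_derive _ _ Hg t Ht)). Qed.

Lemma Abel_bounds (g dg S s : R -> R) (x y m M : R) : x <= y ->
  (forall t, x <= t <= y -> is_derive g t (dg t) /\ continuous dg t /\ dg t <= 0) ->
  (forall t, x <= t <= y -> is_derive S t (s t) /\ continuous s t /\ m <= S t <= M) ->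
  g y * S y - g x * S x + (g x - g y) * m <= RInt (fun t => g t * s t) x y <=
  g y * S y - g x * S x + (g x - g y) * M.
Proof.
  intros Hxy Hg HS.
  rewrite (RInt_by_parts g dg S s x y Hxy)
    by (intros t Ht; split; apply (Hg t Ht) || apply (HS t Ht)).
  assert (Hin : forall t, Rmin x y <= t <= Rmax x y -> x <= t <= y)
    by (intro t; rewrite Rmin_left, Rmax_right; auto).
  assert (Idg : is_RInt dg x y (g y - g x)).
  { apply is_RInt_derive_R; intros t Ht; apply Hin in Ht; apply (Hg t Ht). }
  assert (Econst : forall c, RInt (fun t => dg t * c) x y = c * (g y - g x)).
  { intro c. rewrite <- (is_RInt_unique_R _ _ _ _ Idg), <- RInt_scal_R by (eexists; exact Idg).
    apply RInt_ext. intros; apply Rmult_comm. }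
  assert (Ex : forall k : R -> R, (forall t, x <= t <= y -> continuous k t) ->
            ex_RInt (fun t => dg t * k t) x y).
  { intros k Hk. apply ex_RInt_continuous_R. intros t Ht. apply Hin in Ht.
    apply continuous_mult_R; [apply (Hg t Ht) | apply Hk, Ht]. }
  assert (HcS : forall t, x <= t <= y -> continuous S t)
    by (intros t Ht; apply (continuous_of_is_derive S t (s t)), HS, Ht).
  assert (RInt (fun t => dg t * M) x y <= RInt (fun t => dg t * S t) x y).
  { apply RInt_le; auto; [apply Ex; intros; apply continuous_const|].
    intros t Ht. destruct (Hg t ltac:(lra)) as [_ [_ ?]]. destruct (HS t ltac:(lra)) as [_ [_ ?]]. nra. }
  assert (RInt (fun t => dg t * S t) x y <= RInt (fun t => dg t * m) x y).
  { apply RInt_le; auto; [apply Ex; intros; apply continuous_const|].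
    intros t Ht. destruct (Hg t ltac:(lra)) as [_ [_ ?]]. destruct (HS t ltac:(lra)) as [_ [_ ?]]. nra. }
  rewrite Econst in *. split; nra.
Qed.

(* The primitive S (t w) / w of s (t w) is bounded by 1 / w. *)
Lemma Abel_tail_bound (g dg s S : R -> R) (w T b : R) :
  decreasing_to_0 g dg -> bounded_wave s S -> 0 < w -> 0 < T <= b ->
  Rabs (RInt (fun t => g t * s (t * w)) T b) <= 2 * g T / w.
Proof.
  intros Hg HsS Hw HTb.
  destruct (Abel_bounds g dg (fun t => S (t * w) / w) (fun t => s (t * w)) T b (- / w) (/ w))
    as [L U]; [lra| | |].
  - intros t Ht. split; [|split]; [apply (decr_derive _ _ Hg) | apply (decr_derive_continuous _ _ Hg)
      | apply (decr_derive_nonpos _ _ Hg)]; lra.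
  - intros t Ht. split; [|split].
    + apply (is_derive_ext (fun t => / w * S (t * w))); [intros; apply Rmult_comm|].
      replace (s (t * w)) with (/ w * (w * s (t * w))) by (field; lra).
      apply (is_derive_scal (fun t => S (t * w))), is_derive_scale_arg, (wave_derive _ _ HsS).
    + apply continuous_scale_arg, (wave_continuous _ _ HsS).
    + pose proof (wave_primitive_bound _ _ HsS (t * w)) as HS. apply Rabs_le_between in HS.
      unfold Rdiv. pose proof (Rinv_0_lt_compat w Hw). split; nra.
  - pose proof (decreasing_to_0_nonincreasing g dg Hg T b ltac:(lra) ltac:(lra)).
    pose proof (decr_nonneg _ _ Hg b ltac:(lra)). pose proof (decr_nonneg _ _ Hg T ltac:(lra)).
    pose proof (wave_primitive_bound _ _ HsS (b * w)) as Hb.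
    pose proof (wave_primitive_bound _ _ HsS (T * w)) as HT.
    apply Rabs_le_between in Hb. apply Rabs_le_between in HT.
    set (iw := / w) in *. assert (0 < iw) by (apply Rinv_0_lt_compat; auto).
    unfold Rdiv in *. fold iw in L, U |- *.
    replace (g b * (S (b * w) * iw)) with ((g b * iw) * S (b * w)) in L, U by ring.
    replace (g T * (S (T * w) * iw)) with ((g T * iw) * S (T * w)) in L, U by ring.
    assert (0 <= g b * iw) by nra. assert (0 <= g T * iw) by nra.
    assert (- (g b * iw) <= (g b * iw) * S (b * w) <= g b * iw) by (split; nra).
    assert (- (g T * iw) <= (g T * iw) * S (T * w) <= g T * iw) by (split; nra).
    assert (g b * iw <= g T * iw) by nra.
    apply Rabs_le. split; nra.
Qed.

Section WaveIntegral.
Variables g dg s S : R -> R.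
Hypothesis g_decr : decreasing_to_0 g dg.
Hypothesis sS_wave : bounded_wave s S.
Variable w : R.
Hypothesis w_pos : 0 < w.

Lemma wave_integrand_continuous t : 0 < t -> continuous (fun t => g t * s (t * w)) t.
Proof.
  intro Ht. apply continuous_mult_R; [apply (decreasing_to_0_continuous g dg g_decr t Ht)|].
  apply continuous_scale_arg, (wave_continuous _ _ sS_wave).
Qed.

Lemma wave_RInt_small_near_oo e : 0 < e ->
  exists M, forall a b, M < a -> M < b -> Rabs (RInt (fun t => g t * s (t * w)) a b) < e.
Proof.
  intro He. destruct (decr_lim _ _ g_decr (e * w / 2)) as [M HM]; [nra|].
  exists (Rmax M 1). pose proof (Rmax_l M 1). pose proof (Rmax_r M 1).
  apply RInt_abs_lt_wlog.
  - intros a b Ha Hb. apply ex_RInt_pos; [exact wave_integrand_continuous | lra | lra].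
  - intros a b Ha Hb Hab.
    eapply Rle_lt_trans; [apply (Abel_tail_bound g dg s S); auto; lra|].
    specialize (HM a ltac:(lra)). apply (Rmult_lt_reg_r w); [exact w_pos|].
    replace (2 * g a / w * w) with (2 * g a) by (field; lra). lra.
Qed.

Lemma wave_RInt_small_near_0 sg K d e : 0 < sg < 1 -> 0 < d ->
  (forall t, 0 < t < d -> g t <= K * Rpower t (- sg)) -> 0 < e ->
  exists d', 0 < d' /\ forall a b, 0 < a < d' -> 0 < b < d' ->
    Rabs (RInt (fun t => g t * s (t * w)) a b) < e.
Proof.
  intros Hsg Hd Hg He. set (Kp := Rabs K + 1).
  assert (HKp : 0 < Kp) by (unfold Kp; pose proof (Rabs_pos K); lra).
  destruct (Rpower_small_near_0 (1 - sg) (e * (1 - sg) / Kp)) as [d1 [Hd1 Hd1']]; [lra| |].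
  { apply Rdiv_lt_0_compat; [nra | exact HKp]. }
  exists (Rmin d d1). split; [apply Rmin_pos; auto|].
  pose proof (Rmin_l d d1). pose proof (Rmin_r d d1).
  apply RInt_abs_lt_wlog.
  - intros a b Ha Hb. apply ex_RInt_pos; [exact wave_integrand_continuous | lra | lra].
  - intros a b Ha Hb Hab.
    eapply Rle_lt_trans;
      [apply (RInt_abs_le_power _ sg Kp); [lra | lra | exact wave_integrand_continuous |]|].
    + intros t Ht. rewrite Rabs_mult. pose proof (wave_bound _ _ sS_wave (t * w)).
      pose proof (decr_nonneg _ _ g_decr t ltac:(lra)). rewrite (Rabs_pos_eq (g t)) by auto.
      specialize (Hg t ltac:(lra)). pose proof (Rpower_pos t (- sg)).
      pose proof (Rle_abs K). pose proof (Rabs_pos (s (t * w))).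
      assert (g t * Rabs (s (t * w)) <= g t) by nra. unfold Kp. nra.
    + specialize (Hd1' b ltac:(lra)).
      apply (Rmult_lt_compat_l Kp) in Hd1'; [|exact HKp].
      replace (Kp * (e * (1 - sg) / Kp)) with (e * (1 - sg)) in Hd1' by (field; lra).
      apply (Rmult_lt_reg_r (1 - sg)); [lra|].
      replace (Kp * (Rpower b (1 - sg) / (1 - sg)) * (1 - sg)) with (Kp * Rpower b (1 - sg))
        by (field; lra). lra.
Qed.

Lemma is_RInt_0_oo_wave_exists sg K d : 0 < sg < 1 -> 0 < d ->
  (forall t, 0 < t < d -> g t <= K * Rpower t (- sg)) ->
  exists l, is_RInt_0_oo (fun t => g t * s (t * w)) l.
Proof.
  intros Hsg Hd Hg. apply is_RInt_0_oo_cauchy.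
  - exact wave_integrand_continuous.
  - intros e He. exact (wave_RInt_small_near_0 sg K d e Hsg Hd Hg He).
  - exact wave_RInt_small_near_oo.
Qed.

End WaveIntegral.

Section ConvexDecay.
Variable f : R -> R.
Hypothesis f_lim_oo : filterlim f (Rbar_locally p_infty) (locally 0).
Hypothesis f_C2 : C2_pos f.
Hypothesis f_convex : convex_pos f.

Lemma f_is_derive t : 0 < t -> is_derive f t (Derive f t).
Proof. intro Ht. apply Derive_correct, f_C2, Ht. Qed.

Lemma Df_is_derive t : 0 < t -> is_derive (Derive f) t (Derive (Derive f) t).
Proof. intro Ht. apply Derive_correct, f_C2, Ht. Qed.

Lemma D2f_continuous t : 0 < t -> continuous (Derive (Derive f)) t.
Proof. intro Ht. apply f_C2, Ht. Qed.

Lemma Df_continuous t : 0 < t -> continuous (Derive f) t.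
Proof. intro Ht. exact (continuous_of_is_derive _ _ _ (Df_is_derive t Ht)). Qed.

Lemma f_continuous t : 0 < t -> continuous f t.
Proof. intro Ht. exact (continuous_of_is_derive _ _ _ (f_is_derive t Ht)). Qed.

(* If f'' t < 0, then f' decreases strictly on a neighbourhood of t, and the mean value
   theorem on both halves of [t - q, t + q] contradicts midpoint convexity. *)
Lemma D2f_nonneg t : 0 < t -> 0 <= Derive (Derive f) t.
Proof.
  intros Ht. apply Rnot_lt_le. intro Hneg.
  destruct (continuous_eps _ _ (D2f_continuous t Ht) (- Derive (Derive f) t / 2))
    as [r [Hr Hr']]; [lra|].
  set (q := Rmin r t / 2).
  pose proof (Rmin_pos r t Hr Ht). pose proof (Rmin_l r t). pose proof (Rmin_r r t).
  assert (Hq : 0 < q < t /\ q < r) by (unfold q; lra).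
  destruct (MVT_cor2 f (Derive f) (t - q) t) as [c1 [E1 Hc1]]; [lra| |].
  { intros c Hc. apply is_derive_Reals, f_is_derive. lra. }
  destruct (MVT_cor2 f (Derive f) t (t + q)) as [c2 [E2 Hc2]]; [lra| |].
  { intros c Hc. apply is_derive_Reals, f_is_derive. lra. }
  destruct (MVT_cor2 (Derive f) (Derive (Derive f)) c1 c2) as [c3 [E3 Hc3]]; [lra| |].
  { intros c Hc. apply is_derive_Reals, Df_is_derive. lra. }
  assert (Derive (Derive f) c3 < 0).
  { assert (Hc3t : Rabs (c3 - t) < r) by (apply Rabs_def1; lra).
    specialize (Hr' c3 Hc3t). apply Rabs_def2 in Hr'. lra. }
  assert (Derive f c2 < Derive f c1) by nra.
  pose proof (f_convex (t - q) (t + q) (1 / 2) ltac:(lra) ltac:(lra) ltac:(lra)) as Hmid.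
  replace (1 / 2 * (t - q) + (1 - 1 / 2) * (t + q)) with t in Hmid by field.
  nra.
Qed.

Lemma Df_nondecreasing x y : 0 < x -> x <= y -> Derive f x <= Derive f y.
Proof.
  intros Hx Hxy.
  apply (nondecreasing_of_derive_nonneg (Derive f) (Derive (Derive f)) 0 (y + 1)); try lra;
    intros t Ht; [apply Df_is_derive | apply D2f_nonneg]; lra.
Qed.

(* If f' x > 0, then f' >= f' x on [x, oo) and f could not tend to 0. *)
Lemma Df_nonpos x : 0 < x -> Derive f x <= 0.
Proof.
  intros Hx. apply Rnot_lt_le. intro Hd.
  destruct (proj1 (filterlim_pinfty_eps_iff f 0) f_lim_oo 1 Rlt_0_1) as [M HM].
  set (k := (Rabs (f x) + 1) / Derive f x).
  assert (Hk : k * Derive f x = Rabs (f x) + 1) by (unfold k; field; lra).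
  assert (Hk0 : 0 < k) by (unfold k; pose proof (Rabs_pos (f x)); apply Rdiv_lt_0_compat; lra).
  set (t := Rmax M x + k + 1).
  pose proof (Rmax_l M x). pose proof (Rmax_r M x).
  destruct (MVT_cor2 f (Derive f) x t) as [c [E Hc]]; [unfold t; lra| |].
  { intros c Hc. apply is_derive_Reals, f_is_derive. lra. }
  assert (Derive f x <= Derive f c) by (apply Df_nondecreasing; lra).
  assert (Derive f x * k <= Derive f c * (t - x)) by (unfold t in *; nra).
  specialize (HM t ltac:(unfold t; lra)). rewrite Rminus_0_r in HM. apply Rabs_def2 in HM.
  pose proof (Rle_abs (- f x)). rewrite Rabs_Ropp in *. lra.
Qed.

Lemma f_nonincreasing x y : 0 < x -> x <= y -> f y <= f x.
Proof.
  intros Hx Hxy. cut (- f x <= - f y); [lra|].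
  apply (nondecreasing_of_derive_nonneg (fun t => - f t) (fun t => - Derive f t) 0 (y + 1));
    try lra; intros t Ht.
  - apply (is_derive_opp f), f_is_derive. lra.
  - pose proof (Df_nonpos t ltac:(lra)). lra.
Qed.

Lemma f_nonneg x : 0 < x -> 0 <= f x.
Proof.
  intros Hx. apply Rnot_lt_le. intro Hn.
  destruct (proj1 (filterlim_pinfty_eps_iff f 0) f_lim_oo (- f x)) as [M HM]; [lra|].
  set (t := Rmax M x + 1). pose proof (Rmax_l M x). pose proof (Rmax_r M x).
  specialize (HM t ltac:(unfold t; lra)). rewrite Rminus_0_r in HM. apply Rabs_def2 in HM.
  pose proof (f_nonincreasing x t Hx ltac:(unfold t; lra)). lra.
Qed.

(* By the mean value theorem on [t - 1, t], 0 <= - f'(t) <= f (t - 1) - f t. *)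
Lemma Df_lim_oo e : 0 < e -> exists M, forall t, M < t -> - Derive f t < e.
Proof.
  intros He.
  destruct (proj1 (filterlim_pinfty_eps_iff f 0) f_lim_oo (e / 2)) as [M HM]; [lra|].
  exists (Rmax M 0 + 1). intros t Ht. pose proof (Rmax_l M 0). pose proof (Rmax_r M 0).
  destruct (MVT_cor2 f (Derive f) (t - 1) t) as [c [E Hc]]; [lra| |].
  { intros c Hc. apply is_derive_Reals, f_is_derive. lra. }
  pose proof (Df_nondecreasing c t ltac:(lra) ltac:(lra)).
  pose proof (HM t ltac:(lra)) as Ht1. pose proof (HM (t - 1) ltac:(lra)) as Ht2.
  rewrite Rminus_0_r in Ht1, Ht2. apply Rabs_def2 in Ht1. apply Rabs_def2 in Ht2. nra.
Qed.

Lemma decreasing_to_0_f : decreasing_to_0 f (Derive f).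
Proof.
  split.
  - exact f_is_derive.
  - exact Df_continuous.
  - exact Df_nonpos.
  - exact f_nonneg.
  - intros e He. destruct (proj1 (filterlim_pinfty_eps_iff f 0) f_lim_oo e He) as [M HM].
    exists M. intros t Ht. specialize (HM t Ht). rewrite Rminus_0_r in HM.
    pose proof (Rle_abs (f t)). lra.
Qed.

Lemma decreasing_to_0_opp_Df :
  decreasing_to_0 (fun t => - Derive f t) (fun t => - Derive (Derive f) t).
Proof.
  split.
  - intros t Ht. apply (is_derive_opp (Derive f)), Df_is_derive, Ht.
  - intros t Ht. apply (continuous_opp (V := R_NormedModule)), D2f_continuous, Ht.
  - intros t Ht. pose proof (D2f_nonneg t Ht). lra.
  - intros t Ht. pose proof (Df_nonpos t Ht). lra.
  - exact Df_lim_oo.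
Qed.

Lemma Fcos_Fsin_exist sg K d : 0 < sg < 1 -> 0 < d ->
  (forall t, 0 < t < d -> f t <= K * Rpower t (- sg)) ->
  exists Fc Fs : R -> R,
    (forall w, 0 < w -> is_Fcos f w (Fc w)) /\ (forall w, 0 < w -> is_Fsin f w (Fs w)).
Proof.
  intros Hsg Hd Hf.
  exists (fun w => RInt_gen (fun t => f t * cos (t * w)) (at_right 0) (Rbar_locally p_infty)),
         (fun w => RInt_gen (fun t => f t * sin (t * w)) (at_right 0) (Rbar_locally p_infty)).
  split; intros w Hw; [unfold is_Fcos | unfold is_Fsin]; apply is_RInt_0_oo_RInt_gen.
  - exact (is_RInt_0_oo_wave_exists f (Derive f) cos sin decreasing_to_0_f bounded_wave_cos
             w Hw sg K d Hsg Hd Hf).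
  - exact (is_RInt_0_oo_wave_exists f (Derive f) sin _ decreasing_to_0_f bounded_wave_sin
             w Hw sg K d Hsg Hd Hf).
Qed.

End ConvexDecay.

Section FiniteAtZero.
Variable f : R -> R.
Hypothesis f_lim_oo : filterlim f (Rbar_locally p_infty) (locally 0).
Hypothesis f_C2 : C2_pos f.
Hypothesis f_convex : convex_pos f.
Hypothesis f_lim_0 : filterlim f (at_right 0) (locally (f 0)).

Lemma f_le_power_near_0_of_finite sg : 0 < sg ->
  exists K d, 0 < d /\ forall t, 0 < t < d -> f t <= K * Rpower t (- sg).
Proof.
  intros Hsg. destruct (filterlim_at_right_0_eps f (f 0) f_lim_0 1 Rlt_0_1) as [d [Hd Hd']].
  exists (Rabs (f 0) + 1), (Rmin d 1). split; [apply Rmin_pos; lra|]. intros t Ht.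
  pose proof (Rmin_l d 1). pose proof (Rmin_r d 1).
  specialize (Hd' t ltac:(lra)). apply Rabs_def2 in Hd'.
  assert (1 <= Rpower t (- sg)).
  { replace 1 with (Rpower 1 (- sg)) at 1 by (unfold Rpower; rewrite ln_1, Rmult_0_r; apply exp_0).
    apply Rpower_Ropp_le_contravar; lra. }
  pose proof (Rle_abs (f 0)). pose proof (Rabs_pos (f 0)). nra.
Qed.

Section Wave.
Variables s S U : R -> R.
Hypothesis sS_wave : bounded_wave s S.
Hypothesis SU_wave : bounded_wave S U.
Variable w : R.
Hypothesis w_pos : 0 < w.

Lemma RInt_wave_by_parts a T b : 0 < a <= T -> T <= b ->
  w * RInt (fun t => f t * s (t * w)) a b =
  f b * S (b * w) - f a * S (a * w) + RInt (fun t => - Derive f t * S (t * w)) a T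
  + RInt (fun t => - Derive f t * S (t * w)) T b.
Proof.
  intros HaT HTb.
  assert (HcS : forall t, continuous (fun t => S (t * w)) t)
    by (apply continuous_scale_arg, (bounded_wave_primitive_continuous _ _ sS_wave)).
  assert (Hc : forall t, 0 < t -> continuous (fun t => Derive f t * S (t * w)) t)
    by (intros t Ht; apply continuous_mult_R; [apply (Df_continuous f f_C2), Ht | apply HcS]).
  assert (Hfs : forall t, 0 < t -> continuous (fun t => f t * s (t * w)) t)
    by exact (wave_integrand_continuous f (Derive f) s S
                (decreasing_to_0_f f f_lim_oo f_C2 f_convex) sS_wave w).
  assert (Eopp : forall x y, 0 < x -> 0 < y -> RInt (fun t => - Derive f t * S (t * w)) x y
                   = - RInt (fun t => Derive f t * S (t * w)) x y).
  { intros x y Hx Hy.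
    replace (- RInt (fun t => Derive f t * S (t * w)) x y)
      with (-1 * RInt (fun t => Derive f t * S (t * w)) x y) by ring.
    rewrite <- RInt_scal_R by (apply ex_RInt_pos; auto). apply RInt_ext. intros; simpl; ring. }
  assert (Eparts : RInt (fun t => f t * (w * s (t * w))) a b =
                   f b * S (b * w) - f a * S (a * w) - RInt (fun t => Derive f t * S (t * w)) a b).
  { apply (RInt_by_parts f (Derive f) (fun t => S (t * w)) (fun t => w * s (t * w)));
      [lra | |]; intros t Ht; split.
    - apply (f_is_derive f f_C2); lra.
    - apply (Df_continuous f f_C2); lra.
    - apply is_derive_scale_arg, (wave_derive _ _ sS_wave).
    - apply (continuous_mult_R (fun _ => w)); [apply continuous_const|].
      apply continuous_scale_arg, (wave_continuous _ _ sS_wave). }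
  rewrite !Eopp by lra. rewrite <- RInt_scal_R by (apply ex_RInt_pos; auto; lra).
  rewrite (RInt_ext _ (fun t => f t * (w * s (t * w)))) by (intros; simpl; ring).
  rewrite Eparts, <- (RInt_Chasles_R _ a T b) by (apply ex_RInt_pos; auto; lra). ring.
Qed.

Lemma RInt_wave_finite_bound a T b : 0 < a <= T -> T <= b ->
  Rabs (w * RInt (fun t => f t * s (t * w)) a b + f 0 * S 0) <=
  Rabs (f b) + Rabs (f a * S (a * w) - f 0 * S 0) + (f a - f T) + 2 * (- Derive f T) / w.
Proof.
  intros HaT HTb. rewrite (RInt_wave_by_parts a T b HaT HTb).
  set (J1 := RInt (fun t => - Derive f t * S (t * w)) a T).
  set (J2 := RInt (fun t => - Derive f t * S (t * w)) T b).
  assert (B1 : Rabs J1 <= f a - f T).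
  { assert (I : is_RInt (fun t => - Derive f t) a T (- f T - - f a)).
    { apply (is_RInt_derive_R (fun t => - f t)); intros t Ht;
        rewrite Rmin_left, Rmax_right in Ht by lra.
      - apply (is_derive_opp f), (f_is_derive f f_C2). lra.
      - apply (continuous_opp (V := R_NormedModule)), (Df_continuous f f_C2). lra. }
    replace (f a - f T) with (- f T - - f a) by ring. rewrite <- (is_RInt_unique_R _ _ _ _ I).
    apply RInt_abs_le; [lra | | eexists; exact I |].
    - apply ex_RInt_pos; [|lra|lra]. intros t Ht. apply continuous_mult_R.
      + apply (continuous_opp (V := R_NormedModule)), (Df_continuous f f_C2), Ht.
      + apply continuous_scale_arg, (bounded_wave_primitive_continuous _ _ sS_wave).
    - intros t Ht. rewrite Rabs_mult. pose proof (Df_nonpos f f_lim_oo f_C2 f_convex t ltac:(lra)).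
      rewrite Rabs_pos_eq by lra. pose proof (wave_primitive_bound _ _ sS_wave (t * w)).
      pose proof (Rabs_pos (S (t * w))). nra. }
  pose proof (Abel_tail_bound _ _ S U w T b (decreasing_to_0_opp_Df f f_lim_oo f_C2 f_convex)
                SU_wave w_pos ltac:(lra)) as B2.
  assert (B3 : Rabs (f b * S (b * w)) <= Rabs (f b)).
  { rewrite Rabs_mult. pose proof (wave_primitive_bound _ _ sS_wave (b * w)).
    pose proof (Rabs_pos (f b)). nra. }
  cbv beta in B2. fold J2 in B2.
  replace (f b * S (b * w) - f a * S (a * w) + J1 + J2 + f 0 * S 0)
    with (f b * S (b * w) + (f 0 * S 0 - f a * S (a * w)) + J1 + J2) by ring.
  pose proof (Rabs_triang (f b * S (b * w) + (f 0 * S 0 - f a * S (a * w)) + J1) J2).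
  pose proof (Rabs_triang (f b * S (b * w) + (f 0 * S 0 - f a * S (a * w))) J1).
  pose proof (Rabs_triang (f b * S (b * w)) (f 0 * S 0 - f a * S (a * w))) as Hlast.
  rewrite (Rabs_minus_sym (f 0 * S 0)) in Hlast. lra.
Qed.

Lemma wave_endpoints_small e : 0 < e ->
  exists d, 0 < d /\ exists M, forall a b, 0 < a < d -> M < b ->
    Rabs (f b) + Rabs (f a * S (a * w) - f 0 * S 0) + (f a - f 0) <= e.
Proof.
  intros He. set (e1 := e / 4).
  destruct (continuous_eps S 0 (bounded_wave_primitive_continuous _ _ sS_wave 0)
              (e1 / (Rabs (f 0) + 1))) as [r [Hr Hr']].
  { apply Rdiv_lt_0_compat; [unfold e1; lra | pose proof (Rabs_pos (f 0)); lra]. }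
  destruct (filterlim_at_right_0_eps f (f 0) f_lim_0 e1) as [d [Hd Hd']]; [unfold e1; lra|].
  destruct (proj1 (filterlim_pinfty_eps_iff f 0) f_lim_oo e1) as [M HM]; [unfold e1; lra|].
  exists (Rmin d (r / w)). split; [apply Rmin_pos; [lra | apply Rdiv_lt_0_compat; lra]|].
  exists M. intros a b Ha Hb. pose proof (Rmin_l d (r / w)). pose proof (Rmin_r d (r / w)).
  assert (Hfb : Rabs (f b) < e1) by (specialize (HM b Hb); rewrite Rminus_0_r in HM; exact HM).
  assert (Hfa : Rabs (f a - f 0) < e1) by (apply Hd'; lra).
  assert (HSa : Rabs (S (a * w) - S 0) * (Rabs (f 0) + 1) < e1).
  { assert (Haw : a * w < r).
    { apply (Rmult_lt_reg_r (/ w)); [apply Rinv_0_lt_compat; lra|].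
      replace (a * w * / w) with a by (field; lra). unfold Rdiv in *. lra. }
    specialize (Hr' (a * w) ltac:(rewrite Rminus_0_r, Rabs_pos_eq; nra)).
    apply (Rmult_lt_compat_r (Rabs (f 0) + 1)) in Hr'; [|pose proof (Rabs_pos (f 0)); lra].
    replace (e1 / (Rabs (f 0) + 1) * (Rabs (f 0) + 1)) with e1 in Hr'
      by (field; pose proof (Rabs_pos (f 0)); lra). exact Hr'. }
  assert (Hprod : Rabs (f a * S (a * w) - f 0 * S 0) <= 2 * e1).
  { replace (f a * S (a * w) - f 0 * S 0)
      with ((f a - f 0) * S (a * w) + f 0 * (S (a * w) - S 0)) by ring.
    eapply Rle_trans; [apply Rabs_triang|]. rewrite !Rabs_mult.
    pose proof (wave_primitive_bound _ _ sS_wave (a * w)).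
    pose proof (Rabs_pos (f a - f 0)). pose proof (Rabs_pos (S (a * w) - S 0)).
    pose proof (Rabs_pos (f 0)). nra. }
  pose proof (Rle_abs (f a - f 0)). unfold e1 in *. lra.
Qed.

Lemma Fwave_bound_at_0 T l : 0 < T -> is_RInt_0_oo (fun t => f t * s (t * w)) l ->
  Rabs (w * l + f 0 * S 0) <= f 0 - f T + 2 * (- Derive f T) / w.
Proof.
  intros HT Hl. set (B := f 0 - f T + 2 * (- Derive f T) / w).
  replace (w * l + f 0 * S 0) with (w * (l - - (f 0 * S 0) / w)) by (field; lra).
  rewrite Rabs_mult, (Rabs_pos_eq w) by lra.
  replace B with (w * (B / w)) by (field; lra). apply Rmult_le_compat_l; [lra|].
  apply (is_RInt_0_oo_abs_sub_le _ l _ _ Hl). intros e He.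
  destruct (wave_endpoints_small (e * w)) as [d [Hd [M HM]]]; [nra|].
  exists (Rmin d T). split; [apply Rmin_pos; lra|]. exists (Rmax M T). intros a b Ha Hb.
  pose proof (Rmin_l d T). pose proof (Rmin_r d T). pose proof (Rmax_l M T). pose proof (Rmax_r M T).
  pose proof (RInt_wave_finite_bound a T b ltac:(lra) ltac:(lra)) as Hfin.
  specialize (HM a b ltac:(lra) ltac:(lra)).
  apply (Rmult_le_reg_l w); [lra|].
  rewrite <- (Rabs_pos_eq w) at 1 by lra. rewrite <- Rabs_mult.
  replace (w * (RInt (fun t => f t * s (t * w)) a b - - (f 0 * S 0) / w))
    with (w * RInt (fun t => f t * s (t * w)) a b + f 0 * S 0) by (field; lra).
  replace (w * (B / w + e)) with (B + e * w) by (field; lra). unfold B. lra.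
Qed.

End Wave.

Section Rate.
Variable sg : R.
Hypothesis sg_range : 0 < sg < 1.
Hypothesis Df_rate : filterlim (fun t => Rpower t sg * Derive f t) (at_right 0) (locally 0).

(* On (0, eta) one has -f' t <= e t^(-sg), so t |-> f t + e t^(1-sg)/(1-sg) is nondecreasing
   there; letting its left end tend to 0 gives the first bound. *)
Lemma f0_sub_le_power e : 0 < e -> exists eta, 0 < eta /\ forall T, 0 < T < eta ->
  f 0 - f T <= e * (Rpower T (1 - sg) / (1 - sg)) /\ Rpower T sg * (- Derive f T) <= e.
Proof.
  intros He. destruct (filterlim_at_right_0_eps _ 0 Df_rate e He) as [eta [Heta Hrate]].
  assert (Hrate' : forall t, 0 < t < eta -> - Derive f t <= e * Rpower t (- sg)).
  { intros t Ht. specialize (Hrate t Ht). rewrite Rminus_0_r in Hrate.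
    apply Rabs_def2 in Hrate as [_ Hlo].
    assert (E : - Derive f t = Rpower t (- sg) * - (Rpower t sg * Derive f t)).
    { replace (Rpower t (- sg) * - (Rpower t sg * Derive f t))
        with (- (Rpower t sg * Rpower t (- sg)) * Derive f t) by ring.
      rewrite Rpower_mult_Ropp by lra. ring. }
    rewrite E. pose proof (Rpower_pos t (- sg)). nra. }
  exists eta. split; [exact Heta|]. intros T HT. split.
  2:{ specialize (Hrate T HT). rewrite Rminus_0_r in Hrate. apply Rabs_def2 in Hrate. lra. }
  apply Rle_plus_epsilon. intros e2 He2.
  destruct (filterlim_at_right_0_eps f (f 0) f_lim_0 e2 He2) as [d [Hd Hd']].
  set (a := Rmin d T / 2). pose proof (Rmin_pos d T Hd ltac:(lra)).
  pose proof (Rmin_l d T). pose proof (Rmin_r d T).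
  specialize (Hd' a ltac:(unfold a; lra)). apply Rabs_def2 in Hd'.
  assert (Mono : f a + e * (Rpower a (1 - sg) / (1 - sg)) <= f T + e * (Rpower T (1 - sg) / (1 - sg))).
  { apply (nondecreasing_of_derive_nonneg (fun t => f t + e * (Rpower t (1 - sg) / (1 - sg)))
            (fun t => Derive f t + e * Rpower t (- sg)) 0 eta); try (unfold a; lra); intros t Ht.
    - apply (is_derive_plus f); [apply (f_is_derive f f_C2); lra|].
      apply is_derive_scal, is_derive_Rpower_primitive; lra.
    - specialize (Hrate' t Ht). lra. }
  assert (0 <= e * (Rpower a (1 - sg) / (1 - sg))).
  { apply Rmult_le_pos; [lra|]. apply Rlt_le, Rdiv_lt_0_compat; [apply Rpower_pos | lra]. }
  lra.
Qed.

Lemma Fwave_rate e : 0 < e -> exists W, 1 <= W /\ forall w, W < w ->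
  Rpower w (1 - sg) * (f 0 - f (/ w) + 2 * (- Derive f (/ w)) / w) <= e.
Proof.
  intros He. set (e' := e / (1 / (1 - sg) + 2)).
  assert (He' : 0 < e').
  { unfold e'. apply Rdiv_lt_0_compat; [exact He|].
    pose proof (Rinv_0_lt_compat (1 - sg) ltac:(lra)). unfold Rdiv. lra. }
  destruct (f0_sub_le_power e' He') as [eta [Heta Hbound]].
  exists (Rmax 1 (/ eta)). split; [apply Rmax_l|]. intros w Hw.
  pose proof (Rmax_l 1 (/ eta)). pose proof (Rmax_r 1 (/ eta)).
  assert (HT : 0 < / w < eta).
  { split; [apply Rinv_0_lt_compat; lra|].
    rewrite <- (Rinv_inv eta). apply Rinv_lt_contravar; [|lra].
    apply Rmult_lt_0_compat; [apply Rinv_0_lt_compat|]; lra. }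
  destruct (Hbound (/ w) HT) as [A1 A2].
  pose proof (Rpower_pos w (1 - sg)).
  assert (Hinv : Rpower w (1 - sg) * Rpower (/ w) (1 - sg) = 1).
  { rewrite Rpower_Rinv_l by lra. field. apply Rgt_not_eq, Rpower_pos. }
  assert (P1 : Rpower w (1 - sg) * (f 0 - f (/ w)) <= e' / (1 - sg)).
  { eapply Rle_trans; [apply Rmult_le_compat_l; [lra | exact A1]|].
    replace (Rpower w (1 - sg) * (e' * (Rpower (/ w) (1 - sg) / (1 - sg))))
      with (e' * (Rpower w (1 - sg) * Rpower (/ w) (1 - sg)) / (1 - sg)) by (field; lra).
    rewrite Hinv. lra. }
  assert (P2 : Rpower w (1 - sg) * (2 * - Derive f (/ w) / w) <= 2 * e').
  { rewrite Rpower_1_minus, Rpower_Ropp, <- Rpower_Rinv_l by lra.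
    replace (w * Rpower (/ w) sg * (2 * - Derive f (/ w) / w))
      with (2 * (Rpower (/ w) sg * - Derive f (/ w))) by (field; lra). lra. }
  assert (E : e' / (1 - sg) + 2 * e' = e) by (unfold e'; field; repeat split; lra).
  rewrite Rmult_plus_distr_l. lra.
Qed.

Lemma Fcos_limit_finite_at_0 (Fc : R -> R) : (forall w, 0 < w -> is_Fcos f w (Fc w)) ->
  filterlim (fun w => Rpower w (2 - sg) * Fc w) (Rbar_locally p_infty) (locally 0).
Proof.
  intros HFc. apply filterlim_pinfty_eps_iff. intros e He.
  destruct (Fwave_rate (e / 2)) as [W [HW Hrate]]; [lra|].
  exists W. intros w Hw. specialize (Hrate w Hw).
  pose proof (Fwave_bound_at_0 cos sin (fun x => - cos x) bounded_wave_cos bounded_wave_sin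
                w ltac:(lra) (/ w) (Fc w) ltac:(apply Rinv_0_lt_compat; lra) (HFc w ltac:(lra))) as B.
  rewrite sin_0, Rmult_0_r, Rplus_0_r in B.
  replace (Rpower w (2 - sg)) with (Rpower w (1 - sg) * w)
    by (replace (2 - sg) with (1 + (1 - sg)) by ring; rewrite Rpower_plus, Rpower_1 by lra; ring).
  rewrite Rminus_0_r, Rmult_assoc, Rabs_mult, (Rabs_pos_eq (Rpower w (1 - sg)))
    by apply Rlt_le, Rpower_pos.
  pose proof (Rpower_pos w (1 - sg)).
  apply (Rmult_le_compat_l (Rpower w (1 - sg))) in B; lra.
Qed.

Lemma Fsin_limit_finite_at_0 (Fs : R -> R) : (forall w, 0 < w -> is_Fsin f w (Fs w)) ->
  filterlim (fun w => w * Fs w) (Rbar_locally p_infty) (locally (f 0)).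
Proof.
  intros HFs. apply filterlim_pinfty_eps_iff. intros e He.
  destruct (Fwave_rate (e / 2)) as [W [HW Hrate]]; [lra|].
  exists W. intros w Hw. specialize (Hrate w Hw).
  pose proof (Fwave_bound_at_0 sin (fun x => - cos x) (fun x => - sin x) bounded_wave_sin
                bounded_wave_opp_cos w ltac:(lra) (/ w) (Fs w)
                ltac:(apply Rinv_0_lt_compat; lra) (HFs w ltac:(lra))) as B.
  cbv beta in B. rewrite cos_0 in B. replace (w * Fs w + f 0 * - (1)) with (w * Fs w - f 0) in B by ring.
  assert (1 <= Rpower w (1 - sg)) by (rewrite <- (Rpower_O w) at 1 by lra; apply Rle_Rpower; lra).
  set (X := f 0 - f (/ w) + 2 * - Derive f (/ w) / w) in *.
  assert (0 <= X) by (pose proof (Rabs_pos (w * Fs w - f 0)); lra).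
  assert (X <= Rpower w (1 - sg) * X) by nra.
  lra.
Qed.

End Rate.
End FiniteAtZero.

Lemma Rpower_Ropp_mult_div u w c : 0 < u -> 0 < w ->
  Rpower u (- c) * Rpower (u / w) c = Rpower w (- c).
Proof.
  intros Hu Hw. unfold Rdiv.
  rewrite <- Rpower_mult_distr, Rpower_Rinv_l, !Rpower_Ropp by (try apply Rinv_0_lt_compat; lra).
  field. split; apply Rgt_not_eq, Rpower_pos.
Qed.

Lemma Abel_tail_bound_1 (g dg s S : R -> R) (T b : R) :
  decreasing_to_0 g dg -> bounded_wave s S -> 0 < T <= b ->
  Rabs (RInt (fun t => g t * s t) T b) <= 2 * g T.
Proof.
  intros Hg Hw HTb. pose proof (Abel_tail_bound g dg s S 1 T b Hg Hw Rlt_0_1 HTb) as B.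
  rewrite (RInt_ext _ (fun t => g t * s t)) in B by (intros; rewrite Rmult_1_r; reflexivity).
  lra.
Qed.

Lemma decreasing_to_0_Rpower_Ropp sg : 0 < sg ->
  decreasing_to_0 (fun u => Rpower u (- sg)) (fun u => - sg * Rpower u (- sg - 1)).
Proof.
  intro Hs. split.
  - intros t Ht. apply is_derive_Rpower, Ht.
  - intros t Ht. apply (continuous_mult_R (fun _ => - sg)); [apply continuous_const|].
    apply continuous_Rpower, Ht.
  - intros t Ht. pose proof (Rpower_pos t (- sg - 1)). nra.
  - intros t Ht. apply Rlt_le, Rpower_pos.
  - intros e He. exact (Rpower_Ropp_small_near_oo sg e Hs He).
Qed.

Lemma decreasing_to_0_scale g dg c w : decreasing_to_0 g dg -> 0 <= c -> 0 < w ->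
  decreasing_to_0 (fun u => c * g (u / w)) (fun u => c * dg (u / w) / w).
Proof.
  intros Hg Hc Hw.
  assert (Dw : forall u, is_derive (fun u => u / w) u (/ w))
    by (intro u; auto_derive; [auto | field; lra]).
  assert (Hpos : forall t, 0 < t -> 0 < t / w) by (intros; apply Rdiv_lt_0_compat; lra).
  split.
  - intros t Ht. replace (c * dg (t / w) / w) with (c * (/ w * dg (t / w))) by (field; lra).
    apply (is_derive_scal (fun u => g (u / w))).
    exact (is_derive_comp g (fun u => u / w) t _ _ (decr_derive _ _ Hg _ (Hpos t Ht)) (Dw t)).
  - intros t Ht. apply (continuous_ext (fun u => (c / w) * dg (u / w)));
      [intros; simpl; unfold Rdiv; ring|].
    apply (continuous_mult_R (fun _ => c / w)); [apply continuous_const|].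
    apply (continuous_comp (fun u => u / w) dg); [exact (continuous_of_is_derive _ t _ (Dw t))|].
    apply (decr_derive_continuous _ _ Hg), Hpos, Ht.
  - intros t Ht. pose proof (decr_derive_nonpos _ _ Hg _ (Hpos t Ht)).
    unfold Rdiv. pose proof (Rinv_0_lt_compat w Hw).
    assert (c * dg (t * / w) <= 0) by nra. nra.
  - intros t Ht. pose proof (decr_nonneg _ _ Hg _ (Hpos t Ht)). nra.
  - intros e He. destruct (decr_lim _ _ Hg (e / (c + 1))) as [M HM]; [apply Rdiv_lt_0_compat; lra|].
    exists (Rmax M 0 * w). intros t Ht. pose proof (Rmax_l M 0). pose proof (Rmax_r M 0).
    assert (Htw : M < t / w).
    { apply (Rmult_lt_reg_r w); [exact Hw|]. replace (t / w * w) with t by (field; lra). nra. }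
    specialize (HM _ Htw).
    assert (c * g (t / w) <= c * (e / (c + 1))) by (apply Rmult_le_compat_l; lra).
    assert (c * (e / (c + 1)) < e).
    { apply (Rmult_lt_reg_r (c + 1)); [lra|].
      replace (c * (e / (c + 1)) * (c + 1)) with (c * e) by (field; lra). nra. }
    lra.
Qed.

Lemma is_RInt_0_oo_Rpower_wave_exists s S sg : bounded_wave s S -> 0 < sg < 1 ->
  exists L, is_RInt_0_oo (fun u => Rpower u (- sg) * s u) L.
Proof.
  intros Hw Hsg.
  destruct (is_RInt_0_oo_wave_exists _ _ s S (decreasing_to_0_Rpower_Ropp sg ltac:(lra)) Hw 1
              Rlt_0_1 sg 1 1 Hsg Rlt_0_1) as [L HL]; [intros; lra|].
  exists L. revert HL. apply is_RInt_0_oo_ext. intros t _. now rewrite Rmult_1_r.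
Qed.

Section InfiniteAtZero.
Variable f : R -> R.
Hypothesis f_lim_oo : filterlim f (Rbar_locally p_infty) (locally 0).
Hypothesis f_C2 : C2_pos f.
Hypothesis f_convex : convex_pos f.
Variables sg C : R.
Hypothesis sg_range : 0 < sg < 1.
Hypothesis C_pos : 0 < C.
Hypothesis f_rate : filterlim (fun t => Rpower t sg * f t) (at_right 0) (locally C).

Lemma f_le_power_near_0_of_rate : exists K d, 0 < d /\ forall t, 0 < t < d -> f t <= K * Rpower t (- sg).
Proof.
  destruct (filterlim_at_right_0_eps _ C f_rate 1 Rlt_0_1) as [d [Hd Hd']].
  exists (C + 1), d. split; [exact Hd|]. intros t Ht.
  specialize (Hd' t Ht). apply Rabs_def2 in Hd'.
  replace (f t) with (Rpower t (- sg) * (Rpower t sg * f t))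
    by (rewrite <- Rmult_assoc, Rmult_comm with (r1 := Rpower t (- sg)),
          Rpower_mult_Ropp by lra; ring).
  pose proof (Rpower_pos t (- sg)). nra.
Qed.

Section Wave.
Variables s S : R -> R.
Hypothesis sS_wave : bounded_wave s S.

Section FixedFrequency.
Variable w : R.
Hypothesis w_pos : 0 < w.

Lemma rescaled_continuous u : 0 < u -> continuous (fun u => Rpower w (- sg) * f (u / w) * s u) u.
Proof.
  intro Hu. apply continuous_mult_R; [|apply (wave_continuous _ _ sS_wave)].
  apply (continuous_mult_R (fun _ => Rpower w (- sg))); [apply continuous_const|].
  apply (continuous_comp (fun u => u / w) f).
  - apply (continuous_of_is_derive _ u (/ w)). auto_derive; [auto | field; lra].
  - apply (f_continuous f f_C2), Rdiv_lt_0_compat; lra.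
Qed.

Lemma is_RInt_0_oo_rescaled Fw : is_RInt_0_oo (fun t => f t * s (t * w)) Fw ->
  is_RInt_0_oo (fun u => Rpower w (- sg) * f (u / w) * s u) (Rpower w (1 - sg) * Fw).
Proof.
  intro HF.
  assert (H1 : is_RInt_0_oo (fun u => f (u / w) * s u) (w * Fw)).
  { apply is_RInt_0_oo_scale; [exact w_pos| |].
    - intros u Hu. apply continuous_mult_R; [|apply (wave_continuous _ _ sS_wave)].
      apply (continuous_comp (fun u => u / w) f).
      + apply (continuous_of_is_derive _ u (/ w)). auto_derive; [auto | field; lra].
      + apply (f_continuous f f_C2), Rdiv_lt_0_compat; lra.
    - revert HF. apply is_RInt_0_oo_ext. intros t _. do 2 f_equal. field. lra. }
  pose proof (is_RInt_gen_scal (V := R_NormedModule) _ (Rpower w (- sg)) _ H1) as H2.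
  rewrite Rpower_1_minus by exact w_pos.
  replace (w * Rpower w (- sg) * Fw) with (scal (Rpower w (- sg)) (w * Fw))
    by (change (Rpower w (- sg) * (w * Fw) = w * Rpower w (- sg) * Fw); ring).
  revert H2. apply is_RInt_0_oo_ext. intros t _. change (Rpower w (- sg) * (f (t / w) * s t) =
    Rpower w (- sg) * f (t / w) * s t). ring.
Qed.

Lemma rescaled_sub_power_continuous u : 0 < u ->
  continuous (fun u => Rpower w (- sg) * f (u / w) * s u - C * (Rpower u (- sg) * s u)) u.
Proof.
  intro Hu. apply (continuous_minus (V := R_NormedModule)); [apply rescaled_continuous, Hu|].
  apply (continuous_mult_R (fun _ => C)); [apply continuous_const|].
  apply continuous_mult_R; [apply continuous_Rpower, Hu | apply (wave_continuous _ _ sS_wave)].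
Qed.

Lemma rescaled_sub_power_abs_le u eps : 0 < u ->
  Rabs (Rpower (u / w) sg * f (u / w) - C) <= eps ->
  Rabs (Rpower w (- sg) * f (u / w) * s u - C * (Rpower u (- sg) * s u)) <= eps * Rpower u (- sg).
Proof.
  intros Hu Heps.
  replace (Rpower w (- sg) * f (u / w) * s u - C * (Rpower u (- sg) * s u))
    with ((Rpower u (- sg) * (Rpower (u / w) sg * f (u / w) - C)) * s u)
    by (rewrite <- (Rpower_Ropp_mult_div u w sg) by lra; ring).
  rewrite !Rabs_mult, (Rabs_pos_eq (Rpower u (- sg))) by apply Rlt_le, Rpower_pos.
  pose proof (Rpower_pos u (- sg)). pose proof (wave_bound _ _ sS_wave u).
  pose proof (Rabs_pos (s u)). pose proof (Rabs_pos (Rpower (u / w) sg * f (u / w) - C)).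
  set (X := Rpower u (- sg) * Rabs (Rpower (u / w) sg * f (u / w) - C)).
  assert (X <= eps * Rpower u (- sg)) by (unfold X; nra).
  assert (0 <= X) by (unfold X; nra).
  assert (X * Rabs (s u) <= X) by nra. lra.
Qed.

Lemma RInt_rescaled_compare A a b eps eta : 0 < a <= A -> A <= b -> A < eta * w ->
  (forall t, 0 < t < eta -> Rabs (Rpower t sg * f t - C) <= eps) ->
  Rabs (RInt (fun u => Rpower w (- sg) * f (u / w) * s u - C * (Rpower u (- sg) * s u)) a b)
  <= eps * (Rpower A (1 - sg) / (1 - sg)) + 2 * (Rpower w (- sg) * f (A / w))
     + 2 * C * Rpower A (- sg).
Proof.
  intros HaA HAb HAeta Heps.
  rewrite <- (RInt_Chasles_R _ a A b)
    by (apply ex_RInt_pos; [exact rescaled_sub_power_continuous | lra | lra]).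
  assert (Near : Rabs (RInt (fun u => Rpower w (- sg) * f (u / w) * s u
                                      - C * (Rpower u (- sg) * s u)) a A)
                 <= eps * (Rpower A (1 - sg) / (1 - sg))).
  { apply RInt_abs_le_power; [exact sg_range | exact HaA | exact rescaled_sub_power_continuous|].
    intros u Hu. apply rescaled_sub_power_abs_le; [lra|]. apply Heps.
    split; [apply Rdiv_lt_0_compat; lra|]. apply (Rmult_lt_reg_r w); [exact w_pos|].
    replace (u / w * w) with u by (field; lra). lra. }
  assert (Ep : ex_RInt (fun u => Rpower u (- sg) * s u) A b).
  { apply ex_RInt_pos; [|lra|lra]. intros t Ht.
    apply continuous_mult_R; [apply continuous_Rpower, Ht | apply (wave_continuous _ _ sS_wave)]. }
  rewrite (RInt_minus_R _ _ A b), (RInt_scal_R _ A b C);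
    [| exact Ep | apply ex_RInt_pos; [exact rescaled_continuous | lra | lra] | apply ex_RInt_scal_R, Ep].
  pose proof (Abel_tail_bound_1 _ _ s S A b (decreasing_to_0_scale f (Derive f) (Rpower w (- sg)) w
                (decreasing_to_0_f f f_lim_oo f_C2 f_convex) ltac:(apply Rlt_le, Rpower_pos) w_pos)
                sS_wave ltac:(lra)) as Tf.
  pose proof (Abel_tail_bound_1 _ _ s S A b (decreasing_to_0_Rpower_Ropp sg ltac:(lra))
                sS_wave ltac:(lra)) as Tp.
  cbv beta in Tf, Tp.
  set (I1 := RInt (fun u => Rpower w (- sg) * f (u / w) * s u) A b) in *.
  set (I2 := RInt (fun u => Rpower u (- sg) * s u) A b) in *.
  set (N := RInt (fun u => Rpower w (- sg) * f (u / w) * s u - C * (Rpower u (- sg) * s u)) a A) in *.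
  pose proof (Rabs_triang N (I1 - C * I2)).
  pose proof (Rabs_triang I1 (- (C * I2))).
  rewrite Rabs_Ropp, Rabs_mult, (Rabs_pos_eq C) in * by lra.
  unfold Rminus in *. nra.
Qed.

Lemma Fwave_compare_fixed Fw L A eps eta : 0 < A < eta * w ->
  (forall t, 0 < t < eta -> Rabs (Rpower t sg * f t - C) <= eps) ->
  is_RInt_0_oo (fun t => f t * s (t * w)) Fw ->
  is_RInt_0_oo (fun u => Rpower u (- sg) * s u) L ->
  Rabs (Rpower w (1 - sg) * Fw - C * L) <=
  eps * (Rpower A (1 - sg) / (1 - sg)) + 2 * (Rpower w (- sg) * f (A / w))
  + 2 * C * Rpower A (- sg).
Proof.
  intros HA Heps HF HL.
  pose proof (is_RInt_gen_minus (V := R_NormedModule) _ _ _ _ (is_RInt_0_oo_rescaled Fw HF)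
                (is_RInt_gen_scal (V := R_NormedModule) _ C _ HL)) as HD.
  replace (Rpower w (1 - sg) * Fw - C * L) with ((Rpower w (1 - sg) * Fw - C * L) - 0) by ring.
  apply (is_RInt_0_oo_abs_sub_le (fun u => Rpower w (- sg) * f (u / w) * s u
           - C * (Rpower u (- sg) * s u)) _ 0 _ HD).
  intros e He. exists A. split; [lra|]. exists A. intros a b Ha Hb.
  rewrite Rminus_0_r. eapply Rle_trans; [apply (RInt_rescaled_compare A a b eps eta); lra || auto|].
  lra.
Qed.

End FixedFrequency.

(* Choose A with A^(-sg) small (controls both Abel tails), then eps with eps A^(1-sg)
   small (controls the near part), then w so large that (0, A/w) lies where
   t^sg f t is eps-close to C. *)
Lemma Fwave_limit_infinite_at_0 (F : R -> R) L :
  (forall w, 0 < w -> is_RInt_0_oo (fun t => f t * s (t * w)) (F w)) ->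
  is_RInt_0_oo (fun u => Rpower u (- sg) * s u) L ->
  filterlim (fun w => Rpower w (1 - sg) * F w) (Rbar_locally p_infty) (locally (C * L)).
Proof.
  intros HF HL. apply filterlim_pinfty_eps_iff. intros e He.
  destruct (Rpower_Ropp_small_near_oo sg (e / (2 * (4 * C + 2)))) as [M HM];
    [lra | apply Rdiv_lt_0_compat; lra|].
  set (A := Rmax M 1 + 1). pose proof (Rmax_l M 1). pose proof (Rmax_r M 1).
  assert (HA : 0 < A) by (unfold A; lra).
  specialize (HM A ltac:(unfold A; lra)).
  set (PA := Rpower A (1 - sg) / (1 - sg)).
  assert (HPA : 0 < PA) by (apply Rdiv_lt_0_compat; [apply Rpower_pos | lra]).
  set (eps := Rmin 1 (e / (4 * (PA + 1)))).
  assert (Heps : 0 < eps <= 1)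
    by (split; [apply Rmin_pos; [lra | apply Rdiv_lt_0_compat; lra] | apply Rmin_l]).
  assert (HepsPA : eps * PA <= e / 4).
  { assert (eps <= e / (4 * (PA + 1))) by apply Rmin_r.
    apply Rle_trans with (e / (4 * (PA + 1)) * PA); [apply Rmult_le_compat_r; lra|].
    apply (Rmult_le_reg_r (4 * (PA + 1))); [lra|]. field_simplify; nra. }
  destruct (filterlim_at_right_0_eps _ C f_rate eps (proj1 Heps)) as [eta [Heta Hclose]].
  exists (A / eta). intros w Hw.
  assert (Hw0 : 0 < w) by (pose proof (Rdiv_lt_0_compat A eta HA Heta); lra).
  assert (HAeta : A < eta * w).
  { apply (Rmult_lt_reg_r (/ eta)); [apply Rinv_0_lt_compat, Heta|].
    replace (eta * w * / eta) with w by (field; lra). exact Hw. }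
  pose proof (Fwave_compare_fixed w Hw0 (F w) L A eps eta (conj HA HAeta)
               ltac:(intros t Ht; apply Rlt_le, Hclose, Ht) (HF w Hw0) HL) as B.
  assert (HAw : 0 < A / w < eta).
  { split; [apply Rdiv_lt_0_compat; lra|]. apply (Rmult_lt_reg_r w); [exact Hw0|].
    replace (A / w * w) with A by (field; lra). lra. }
  specialize (Hclose _ HAw). apply Rabs_def2 in Hclose.
  assert (Hphi : Rpower w (- sg) * f (A / w) <= Rpower A (- sg) * (C + 1)).
  { rewrite <- (Rpower_Ropp_mult_div A w sg), Rmult_assoc by lra.
    apply Rmult_le_compat_l; [apply Rlt_le, Rpower_pos | lra]. }
  fold PA in B. pose proof (Rpower_pos A (- sg)).
  assert (Rpower A (- sg) * (4 * C + 2) < e / 2).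
  { apply (Rmult_lt_compat_r (4 * C + 2)) in HM; [|lra].
    replace (e / (2 * (4 * C + 2)) * (4 * C + 2)) with (e / 2) in HM by (field; lra). exact HM. }
  nra.
Qed.

End Wave.

Lemma Fcos_Fsin_limits_infinite_at_0 (Fc Fs : R -> R) :
  (forall w, 0 < w -> is_Fcos f w (Fc w)) -> (forall w, 0 < w -> is_Fsin f w (Fs w)) ->
  exists Lc Ls,
    is_RInt_0_oo (fun u => Rpower u (- sg) * cos u) Lc /\
    is_RInt_0_oo (fun u => Rpower u (- sg) * sin u) Ls /\
    filterlim (fun w => Rpower w (1 - sg) * Fc w) (Rbar_locally p_infty) (locally (C * Lc)) /\
    filterlim (fun w => Rpower w (1 - sg) * Fs w) (Rbar_locally p_infty) (locally (C * Ls)).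
Proof.
  intros HFc HFs.
  destruct (is_RInt_0_oo_Rpower_wave_exists _ _ sg bounded_wave_cos sg_range) as [Lc HLc].
  destruct (is_RInt_0_oo_Rpower_wave_exists _ _ sg bounded_wave_sin sg_range) as [Ls HLs].
  exists Lc, Ls. split; [exact HLc|]. split; [exact HLs|]. split.
  - exact (Fwave_limit_infinite_at_0 cos sin bounded_wave_cos Fc Lc HFc HLc).
  - exact (Fwave_limit_infinite_at_0 sin _ bounded_wave_sin Fs Ls HFs HLs).
Qed.

End InfiniteAtZero.

Lemma sin_le_id a : 0 < a -> sin a <= a.
Proof.
  intro Ha. destruct (MVT_cor2 sin cos 0 a Ha) as [c [E Hc]].
  - intros c Hc. apply derivable_pt_lim_sin.
  - rewrite sin_0 in E. pose proof (COS_bound c). nra.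
Qed.

Section SinePositivity.
Variables g dg : R -> R.
Hypothesis g_decr : decreasing_to_0 g dg.

Lemma ex_RInt_decreasing_sin (h : R -> R) a b : (forall t, 0 < t -> continuous h t) ->
  0 < a -> 0 < b -> ex_RInt (fun u => h u * sin u) a b.
Proof.
  intros Hh Ha Hb. apply ex_RInt_pos; auto. intros t Ht.
  apply continuous_mult_R; [apply Hh, Ht | apply (wave_continuous _ _ bounded_wave_sin)].
Qed.

(* (g - g PI) sin is nonnegative on (0, PI) and at least (g (3/2) - g PI) sin 1 on [1, 3/2]. *)
Lemma RInt_sin_shifted_lower a : 0 < a < 1 ->
  (g (3/2) - g PI) * sin 1 / 2 <= RInt (fun u => (g u - g PI) * sin u) a PI.
Proof.
  intros Ha. pose proof PI2_3_2 as HPI.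
  assert (Hc : forall t, 0 < t -> continuous (fun u => g u - g PI) t).
  { intros t Ht. apply (continuous_minus (V := R_NormedModule));
      [apply (decreasing_to_0_continuous _ _ g_decr), Ht | apply continuous_const]. }
  assert (Hdec := decreasing_to_0_nonincreasing _ _ g_decr).
  assert (Hnn : forall x y, 0 < x -> x <= y -> y <= PI ->
                  0 <= RInt (fun u => (g u - g PI) * sin u) x y).
  { intros x y Hx Hxy HyP. rewrite <- (Rmult_0_r (y - x)), <- (RInt_const (V := R_CompleteNormedModule)).
    apply RInt_le; [exact Hxy | apply ex_RInt_continuous_R; intros; apply continuous_const
      | apply ex_RInt_decreasing_sin; auto; lra|].
    intros t Ht. apply Rmult_le_pos; [pose proof (Hdec t PI ltac:(lra) ltac:(lra)); lra|].
    apply sin_ge_0; lra. }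
  assert (Hmid : (g (3/2) - g PI) * sin 1 / 2 <= RInt (fun u => (g u - g PI) * sin u) 1 (3/2)).
  { replace ((g (3/2) - g PI) * sin 1 / 2) with ((3/2 - 1) * ((g (3/2) - g PI) * sin 1)) by field.
    rewrite <- (RInt_const (V := R_CompleteNormedModule)).
    apply RInt_le; [lra | apply ex_RInt_continuous_R; intros; apply continuous_const
      | apply ex_RInt_decreasing_sin; auto; lra|].
    intros t Ht.
    assert (g (3/2) <= g t) by (apply Hdec; lra).
    assert (g PI <= g (3/2)) by (apply Hdec; lra).
    assert (sin 1 <= sin t) by (apply sin_incr_1; lra).
    assert (0 <= sin 1) by (apply sin_ge_0; lra).
    nra. }
  rewrite <- (RInt_Chasles_R _ a 1 PI), <- (RInt_Chasles_R _ 1 (3/2) PI)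
    by (apply ex_RInt_decreasing_sin; auto; lra).
  pose proof (Hnn a 1 ltac:(lra) ltac:(lra) ltac:(lra)).
  pose proof (Hnn (3/2) PI ltac:(lra) ltac:(lra) ltac:(lra)). lra.
Qed.

Lemma RInt_sin_decreasing_lower a b : 0 < a < 1 -> PI < b ->
  (g (3/2) - g PI) * sin 1 / 2 + g PI * (cos a - 1) <= RInt (fun u => g u * sin u) a b.
Proof.
  intros Ha Hb. pose proof PI2_3_2 as HPI.
  assert (Hgc := decreasing_to_0_continuous _ _ g_decr).
  rewrite <- (RInt_Chasles_R _ a PI b) by (apply ex_RInt_decreasing_sin; auto; lra).
  pose proof (Abel_tail_bound_1 g dg sin _ PI b g_decr bounded_wave_sin ltac:(lra)) as Tail.
  apply Rabs_le_between in Tail.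
  assert (Hsin : RInt sin a PI = cos a + 1).
  { rewrite (is_RInt_unique_R _ _ _ (- cos PI - - cos a)); [rewrite cos_PI; lra|].
    apply (is_RInt_derive_R (fun u => - cos u)); intros x _;
      [apply (wave_derive _ _ bounded_wave_sin) | apply (wave_continuous _ _ bounded_wave_sin)]. }
  assert (Hsplit : RInt (fun u => g u * sin u) a PI =
                   RInt (fun u => (g u - g PI) * sin u) a PI + g PI * RInt sin a PI).
  { rewrite <- RInt_scal_R, <- RInt_plus_R.
    - apply RInt_ext. intros x _. simpl. ring.
    - apply ex_RInt_decreasing_sin; [|lra|lra]. intros t Ht.
      apply (continuous_minus (V := R_NormedModule)); [apply Hgc, Ht | apply continuous_const].
    - apply ex_RInt_scal_R, ex_RInt_continuous_R. intros; apply (wave_continuous _ _ bounded_wave_sin).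
    - apply ex_RInt_continuous_R. intros; apply (wave_continuous _ _ bounded_wave_sin). }
  pose proof (RInt_sin_shifted_lower a Ha).
  assert (0 <= g PI) by (apply (decr_nonneg _ _ g_decr); lra).
  rewrite Hsplit, Hsin. nra.
Qed.

Lemma RInt_sin_decreasing_pos_eventually : g PI < g (3/2) ->
  exists d, 0 < d /\ exists M, forall a b, 0 < a < d -> M < b ->
    (g (3/2) - g PI) * sin 1 / 4 <= RInt (fun u => g u * sin u) a b.
Proof.
  intros Hg. pose proof PI2_3_2.
  assert (Hs1 : 0 < sin 1) by (apply sin_gt_0; lra).
  set (D := (g (3/2) - g PI) * sin 1 / 2).
  assert (HD : 0 < D) by (unfold D; nra).
  assert (Hgp : 0 <= g PI) by (apply (decr_nonneg _ _ g_decr); lra).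
  destruct (continuous_eps cos 0 (wave_continuous _ _ bounded_wave_cos 0)
              (D / (2 * (g PI + 1)))) as [r [Hr Hr']]; [apply Rdiv_lt_0_compat; lra|].
  exists (Rmin 1 r). split; [apply Rmin_pos; lra|].
  exists PI. intros a b Ha Hb. pose proof (Rmin_l 1 r). pose proof (Rmin_r 1 r).
  pose proof (RInt_sin_decreasing_lower a b ltac:(lra) Hb) as Hlow. fold D in Hlow.
  specialize (Hr' a ltac:(rewrite Rminus_0_r, Rabs_pos_eq; lra)).
  rewrite cos_0 in Hr'. apply Rabs_def2 in Hr'.
  assert (g PI * (1 - cos a) <= g PI * (D / (2 * (g PI + 1)))) by (apply Rmult_le_compat_l; lra).
  assert (g PI * (D / (2 * (g PI + 1))) <= D / 2).
  { apply (Rmult_le_reg_r (2 * (g PI + 1))); [lra|].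
    replace (g PI * (D / (2 * (g PI + 1))) * (2 * (g PI + 1))) with (g PI * D) by (field; lra). nra. }
  unfold D in *. lra.
Qed.

End SinePositivity.

Lemma is_RInt_0_oo_Rpower_sin_pos sg L : 0 < sg ->
  is_RInt_0_oo (fun u => Rpower u (- sg) * sin u) L -> 0 < L.
Proof.
  intros Hs HL. pose proof PI2_3_2. pose proof (sin_gt_0 1 ltac:(lra) ltac:(lra)).
  assert (Hg : Rpower PI (- sg) < Rpower (3/2) (- sg)) by (apply Rpower_Ropp_lt_contravar; lra).
  pose proof (is_RInt_0_oo_ge _ L _ HL (RInt_sin_decreasing_pos_eventually _ _
                (decreasing_to_0_Rpower_Ropp sg Hs) Hg)).
  nra.
Qed.

Lemma RInt_Rpower_cos_by_parts sg a b : 0 < a <= b ->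
  RInt (fun u => Rpower u (- sg) * cos u) a b =
  Rpower b (- sg) * sin b - Rpower a (- sg) * sin a
  + sg * RInt (fun u => Rpower u (- (sg + 1)) * sin u) a b.
Proof.
  intros Hab.
  rewrite (RInt_by_parts (fun u => Rpower u (- sg)) (fun u => - sg * Rpower u (- sg - 1)) sin cos)
    by (lra || (intros t Ht; split; [apply is_derive_Rpower; lra|];
      apply (continuous_mult_R (fun _ => - sg)); [apply continuous_const | apply continuous_Rpower; lra])
    || (intros t Ht; split; [apply (wave_derive _ _ bounded_wave_cos)
                             | apply (wave_continuous _ _ bounded_wave_cos)])).
  rewrite (RInt_ext _ (fun u => - sg * (Rpower u (- (sg + 1)) * sin u)))
    by (intros x _; replace (- sg - 1) with (- (sg + 1)) by ring; simpl; ring).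
  rewrite RInt_scal_R by (apply ex_RInt_decreasing_sin; [intros; apply continuous_Rpower | |]; lra).
  lra.
Qed.

(* After integrating by parts, the boundary terms vanish (a^(-sg) sin a <= a^(1-sg)) and
   what is left is sg times a positive sine integral with the weight u^(-(sg+1)). *)
Lemma is_RInt_0_oo_Rpower_cos_pos sg L : 0 < sg < 1 ->
  is_RInt_0_oo (fun u => Rpower u (- sg) * cos u) L -> 0 < L.
Proof.
  intros Hs HL. pose proof PI2_3_2. pose proof (sin_gt_0 1 ltac:(lra) ltac:(lra)).
  assert (Hq : Rpower PI (- (sg + 1)) < Rpower (3/2) (- (sg + 1)))
    by (apply Rpower_Ropp_lt_contravar; lra).
  destruct (RInt_sin_decreasing_pos_eventually _ _ (decreasing_to_0_Rpower_Ropp (sg + 1) ltac:(lra)) Hq)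
    as [d1 [Hd1 [M1 HM1]]].
  set (D := (Rpower (3/2) (- (sg + 1)) - Rpower PI (- (sg + 1))) * sin 1 / 4) in HM1.
  assert (HD : 0 < D) by (unfold D; nra).
  destruct (Rpower_small_near_0 (1 - sg) (sg * D / 4)) as [d2 [Hd2 Hd2']]; [lra | nra|].
  destruct (Rpower_Ropp_small_near_oo sg (sg * D / 4)) as [M2 HM2]; [lra | nra|].
  apply Rlt_le_trans with (sg * D / 2); [nra|].
  apply (is_RInt_0_oo_ge _ L _ HL).
  exists (Rmin d1 (Rmin d2 1)). split; [apply Rmin_pos; [lra | apply Rmin_pos; lra]|].
  exists (Rmax (Rmax M1 M2) 1). intros a b Ha Hb.
  pose proof (Rmin_l d1 (Rmin d2 1)). pose proof (Rmin_r d1 (Rmin d2 1)).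
  pose proof (Rmin_l d2 1). pose proof (Rmin_r d2 1).
  pose proof (Rmax_l (Rmax M1 M2) 1). pose proof (Rmax_r (Rmax M1 M2) 1).
  pose proof (Rmax_l M1 M2). pose proof (Rmax_r M1 M2).
  specialize (HM1 a b ltac:(lra) ltac:(lra)).
  specialize (Hd2' a ltac:(lra)). specialize (HM2 b ltac:(lra)).
  rewrite RInt_Rpower_cos_by_parts by lra.
  assert (Rpower a (- sg) * sin a <= Rpower a (1 - sg)).
  { rewrite Rpower_1_minus, Rmult_comm by lra.
    apply Rmult_le_compat_r; [apply Rlt_le, Rpower_pos | apply sin_le_id; lra]. }
  assert (- Rpower b (- sg) <= Rpower b (- sg) * sin b).
  { pose proof (SIN_bound b). pose proof (Rpower_pos b (- sg)). nra. }
  assert (sg * D <= sg * RInt (fun u => Rpower u (- (sg + 1)) * sin u) a b)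
    by (apply Rmult_le_compat_l; lra).
  lra.
Qed.

Theorem proposition3p3 (f : R -> R) :
  filterlim f (Rbar_locally p_infty) (locally 0) ->
  eventually_decreasing f ->
  C2_pos f ->
  convex_pos f ->
  (exists eps, 0 < eps /\ monotone_on_0 (Derive (Derive f)) eps) ->
  (* (a) f(0) finite *)
  ((filterlim f (at_right 0) (locally (f 0)) ->
    forall s1, 0 < s1 < 1 ->
    filterlim (fun t => Rpower t s1 * Derive f t) (at_right 0) (locally 0) ->
    exists Fc Fs : R -> R,
      (forall w, 0 < w -> is_Fcos f w (Fc w)) /\
      (forall w, 0 < w -> is_Fsin f w (Fs w)) /\
      filterlim (fun w => Rpower w (2 - s1) * Fc w) (Rbar_locally p_infty) (locally 0) /\
      filterlim (fun w => w * Fs w) (Rbar_locally p_infty) (locally (f 0)))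
  /\
  (* (b) f(0) infinite *)
   (filterlim f (at_right 0) (Rbar_locally p_infty) ->
    forall s2, 0 < s2 < 1 ->
    (exists C, 0 < C /\
       filterlim (fun t => Rpower t s2 * f t) (at_right 0) (locally C)) ->
    exists Fc Fs : R -> R,
      (forall w, 0 < w -> is_Fcos f w (Fc w)) /\
      (forall w, 0 < w -> is_Fsin f w (Fs w)) /\
      (exists Lc, 0 < Lc /\
         filterlim (fun w => Rpower w (1 - s2) * Fc w) (Rbar_locally p_infty) (locally Lc)) /\
      (exists Ls, 0 < Ls /\
         filterlim (fun w => Rpower w (1 - s2) * Fs w) (Rbar_locally p_infty) (locally Ls)))).
Proof.
  intros Hlim _ HC2 Hconv _. split.
  - intros H0 s1 Hs1 Hrate.
    destruct (f_le_power_near_0_of_finite f H0 s1 (proj1 Hs1)) as [K [d [Hd Hf]]].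
    destruct (Fcos_Fsin_exist f Hlim HC2 Hconv s1 K d Hs1 Hd Hf) as [Fc [Fs [HFc HFs]]].
    exists Fc, Fs. split; [exact HFc|]. split; [exact HFs|]. split.
    + exact (Fcos_limit_finite_at_0 f Hlim HC2 Hconv H0 s1 Hs1 Hrate Fc HFc).
    + exact (Fsin_limit_finite_at_0 f Hlim HC2 Hconv H0 s1 Hs1 Hrate Fs HFs).
  - intros _ s2 Hs2 [C [HC Hrate]].
    destruct (f_le_power_near_0_of_rate f s2 C Hrate) as [K [d [Hd Hf]]].
    destruct (Fcos_Fsin_exist f Hlim HC2 Hconv s2 K d Hs2 Hd Hf) as [Fc [Fs [HFc HFs]]].
    destruct (Fcos_Fsin_limits_infinite_at_0 f Hlim HC2 Hconv s2 C Hs2 HC Hrate Fc Fs HFc HFs)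
      as [Lc [Ls [HLc [HLs [Hc Hs]]]]].
    exists Fc, Fs. split; [exact HFc|]. split; [exact HFs|]. split.
    + exists (C * Lc). split; [|exact Hc].
      apply Rmult_lt_0_compat; [exact HC | exact (is_RInt_0_oo_Rpower_cos_pos s2 Lc Hs2 HLc)].
    + exists (C * Ls). split; [|exact Hs].
      apply Rmult_lt_0_compat; [exact HC | exact (is_RInt_0_oo_Rpower_sin_pos s2 Ls (proj1 Hs2) HLs)].
Qed.
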